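(* Let $\mathfrak{A}$ be an atomic weakly associative relation algebra and let $\mathfrak{B}=\langle B,T_\kappa,E_{\kappa\lambda}\rangle_{\kappa,\lambda<3}$ be its suitable structure. Then $\mathfrak{Cm}\,\mathfrak{B}\cong\mathfrak{Rc}\,\mathfrak{B}$, via the map $R$ defined for $X\subseteq B$ by $R(X)=\bigcup_{t\in X}R_t$.
   Context: WA: algebras $\langle A,+,\overline{\phantom{x}},;,\breve{\phantom{x}},1'\rangle$ with $x\cdot y=\overline{\overline{x}+\overline{y}}$, $0'=\overline{1'}$, $1=1'+0'$, $0=\overline{1}$, satisfying for all $x,y,z$: $x+y=y+x$; $x+(y+z)=(x+y)+z$; $\overline{\overline{x}+\overline{y}}+\overline{\overline{x}+y}=x$; $((x\cdot 1');1);1=(x\cdot1');1$; $(x+y);z=x;z+y;z$; $x;1'=x$; $\breve{\breve{x}}=x$; $\breve{(x+y)}=\breve{x}+\breve{y}$; $\breve{(x;y)}=\breve{y};\breve{x}$; $\breve{x};\overline{x;y}+\overline{y}=\overline{y}$. $\mathrm{At}(\mathfrak{A})$ = set of atoms. Suitable structure: $B=\{s\in{}^3\mathrm{At}(\mathfrak{A}): s_2;s_0\ge s_1\}$; $T_\kappa=\{\langle s,t\rangle\in B\times B:s_\kappa=t_\kappa\}$; $E_{\kappa\kappa}=B$; for distinct $\kappa,\lambda$ with third index $\mu$, $E_{\kappa\lambda}=\{s\in B:s_\mu\le1'\}$. Complex algebra: $\mathfrak{Cm}\,\mathfrak{B}=\langle\mathcal{P}(B),\cup,\cap,B\setminus\cdot,\emptyset,B,T_\kappa^*,E_{\kappa\lambda}\rangle_{\kappa,\lambda<3}$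 with $T_\kappa^*(X)=\{y\in B:\exists x\in X\ \langle y,x\rangle\in T_\kappa\}$. Trails: a $\mathfrak{B}$-trail is $p=\langle t_0,\kappa_0,\dots,t_n,\kappa_n\rangle$, $n\in\omega$, $t_i\in B$, $\kappa_i<3$, with $t_i\ne t_{i+1}$ and $\langle t_i,t_{i+1}\rangle\in T_{\kappa_i}$ for $i<n$; it ends at $t_n$. $\mathrm{Tr}(\mathfrak{B})$ = set of trails; $p\lambda=\langle t_0,\kappa_0,\dots,t_n,\lambda\rangle$. $\approx$ is the smallest equivalence relation on $\mathrm{Tr}(\mathfrak{B})$ with (for trails of the displayed forms): (a) $\langle t_0,\kappa_0,\dots,t_i,\lambda,s,\lambda,t_i,\kappa_i,\dots,t_n,\kappa_n\rangle\approx\langle t_0,\kappa_0,\dots,t_i,\kappa_i,\dots,t_n,\kappa_n\rangle$; (b) $\langle t_0,\kappa_0,\dots,t_n,\lambda,s,\nu\rangle\approx\langle t_0,\kappa_0,\dots,t_n,\nu\rangle$ if $\lambda\ne\nu$; (c) $\langle t_0,\kappa_0,\dots,t_n,\lambda\rangle\approx\langle t_0,\kappa_0,\dots,t_n,\kappa_n\rangle$ if $t_n\in E_{\lambda\kappa_n}$. $p^{\mathfrak{B}}$ = $\approx$-class of $p$; $U(\mathfrak{B})=\{p^{\mathfrak{B}}:p\in\mathrm{Tr}(\mathfrak{B})\}$; $R_t=\{\langle(p0)^{\mathfrak{B}},(p1)^{\mathfrak{B}},(p2)^{\mathfrak{B}}\rangle:p\in\mathrm{Tr}(\mathfrak{B})\text{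 ends at }t\}$; $V(\mathfrak{B})=\bigcup_{t\in B}R_t$. Set algebras: the full 3-dimensional cylindric set algebra on $U$ is $\langle\mathcal{P}({}^3U),\cup,{}^3U\setminus\cdot,C_\kappa,D_{\kappa\lambda}\rangle_{\kappa,\lambda<3}$ with $C_\kappa X=\{v\in{}^3U:\exists u\in X\ \forall\lambda\ne\kappa\ u_\lambda=v_\lambda\}$ and $D_{\kappa\lambda}=\{v\in{}^3U:v_\kappa=v_\lambda\}$. Let $\mathfrak{C}$ be the subalgebra of the full cylindric set algebra on $U(\mathfrak{B})$ completely generated by $\{R_t:t\in B\}$ (closed under arbitrary unions). $\mathfrak{Rc}\,\mathfrak{B}$ is the relativization of $\mathfrak{C}$ to $V=V(\mathfrak{B})$: universe $\{X\in C:X\subseteq V\}$, operations $\cup$, $V\setminus\cdot$, $C^{[V]}_\kappa X=V\cap C_\kappa X$, constants $D^{[V]}_{\kappa\lambda}=V\cap D_{\kappa\lambda}$. *)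

From Stdlib Require Import List.
Import ListNotations.

Record WA := {
  car :> Type;
  plus : car -> car -> car;
  compl : car -> car;
  comp : car -> car -> car;
  conv : car -> car;
  id1 : car;
  wa_axioms :
    let meet x y := compl (plus (compl x) (compl y)) in
    let div := compl id1 in
    let one := plus id1 div in
    (forall x y, plus x y = plus y x) /\
    (forall x y z, plus x (plus y z) = plus (plus x y) z) /\
    (forall x y, plus (compl (plus (compl x) (compl y)))
                      (compl (plus (compl x) y)) = x) /\
    (forall x, comp (comp (meet x id1) one) one = comp (meet x id1) one) /\
    (forall x y z, comp (plus x y) z = plus (comp x z) (comp y z)) /\
    (forall x, comp x id1 = x) /\
    (forall x, conv (conv x) = x) /\
    (forall x y, conv (plus x y) = plus (conv x) (conv y)) /\
    (forall x y, conv (comp x y) = comp (conv y) (conv x)) /\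
    (forall x y, plus (comp (conv x) (compl (comp x y))) (compl y) = compl y)
}.

Section WAdefs.
Variable W : WA.

Definition meet (x y : W) : W := compl W (plus W (compl W x) (compl W y)).
Definition one : W := plus W (id1 W) (compl W (id1 W)).
Definition zero : W := compl W one.
Definition leq (x y : W) : Prop := plus W x y = y.
Definition atom (a : W) : Prop :=
  a <> zero /\ forall y, leq y a -> y = zero \/ y = a.
Definition atomic : Prop :=
  forall x : W, x <> zero -> exists a, atom a /\ leq a x.

End WAdefs.

Inductive I3 : Type := I0 | I1 | I2.

(* the third index mu for distinct kappa, lambda (arbitrary otherwise) *)
Definition third (k l : I3) : I3 :=
  match k, l with
  | I0, I1 | I1, I0 => I2
  | I0, I2 | I2, I0 => I1
  | I1, I2 | I2, I1 => I0
  | I0, I0 => I0 | I1, I1 => I1 | I2, I2 => I2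
  end.

Section Suitable.
Variable W : WA.

Definition tri : Type := I3 -> W.

Definition inB (s : tri) : Prop :=
  (forall k, atom W (s k)) /\ leq W (s I1) (comp W (s I2) (s I0)).

Definition T (k : I3) (s t : tri) : Prop := inB s /\ inB t /\ s k = t k.

Definition E (k l : I3) (s : tri) : Prop :=
  inB s /\ (k <> l -> leq W (s (third k l)) (id1 W)).

Definition subB (X : tri -> Prop) : Prop := forall s, X s -> inB s.
Definition Cm_union (X Y : tri -> Prop) : tri -> Prop := fun s => X s \/ Y s.
Definition Cm_inter (X Y : tri -> Prop) : tri -> Prop := fun s => X s /\ Y s.
Definition Cm_compl (X : tri -> Prop) : tri -> Prop := fun s => inB s /\ ~ X s.
Definition Cm_empty : tri -> Prop := fun _ => False.
Definition Cm_full : tri -> Prop := inB.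
Definition Tstar (k : I3) (X : tri -> Prop) : tri -> Prop :=
  fun y => inB y /\ exists x, X x /\ T k y x.

(* a trail <t_0,k_0,...,t_n,k_n> is the nonempty list [(t_0,k_0);...;(t_n,k_n)] *)
Definition rtrail := list (tri * I3).

Fixpoint valid_from (x : tri * I3) (r : rtrail) : Prop :=
  match r with
  | [] => True
  | y :: r' => inB (fst y) /\ fst x <> fst y /\ T (snd x) (fst x) (fst y)
               /\ valid_from y r'
  end.

Definition is_trail (p : rtrail) : Prop :=
  match p with
  | [] => False
  | x :: r => inB (fst x) /\ valid_from x r
  end.

Definition ends_at (p : rtrail) (t : tri) : Prop :=
  exists l k, p = l ++ [(t, k)].

Fixpoint setlast (p : rtrail) (lam : I3) : rtrail :=
  match p with
  | [] => []
  | [(t, _)] => [(t, lam)]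
  | x :: r => x :: setlast r lam
  end.

Inductive approx : rtrail -> rtrail -> Prop :=
| ap_refl p : is_trail p -> approx p p
| ap_sym p q : approx p q -> approx q p
| ap_trans p q r : approx p q -> approx q r -> approx p r
| ap_a l1 ti lam s ki l2 :
    is_trail (l1 ++ (ti, lam) :: (s, lam) :: (ti, ki) :: l2) ->
    is_trail (l1 ++ (ti, ki) :: l2) ->
    approx (l1 ++ (ti, lam) :: (s, lam) :: (ti, ki) :: l2) (l1 ++ (ti, ki) :: l2)
| ap_b l tn lam s nu :
    lam <> nu ->
    is_trail (l ++ [(tn, lam); (s, nu)]) ->
    is_trail (l ++ [(tn, nu)]) ->
    approx (l ++ [(tn, lam); (s, nu)]) (l ++ [(tn, nu)])
| ap_c l tn lam kn :
    E lam kn tn ->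
    is_trail (l ++ [(tn, lam)]) ->
    is_trail (l ++ [(tn, kn)]) ->
    approx (l ++ [(tn, lam)]) (l ++ [(tn, kn)]).

Definition cls (p : rtrail) : rtrail -> Prop := fun q => approx p q.

Definition UB : Type := { c : rtrail -> Prop | exists p, is_trail p /\ c = cls p }.

Definition vec : Type := I3 -> UB.

Definition Rt (t : tri) : vec -> Prop :=
  fun v => exists p, is_trail p /\ ends_at p t /\
           forall k, proj1_sig (v k) = cls (setlast p k).

Definition VB : vec -> Prop := fun v => exists t, inB t /\ Rt t v.

Definition Cyl (k : I3) (X : vec -> Prop) : vec -> Prop :=
  fun v => exists u, X u /\ forall l, l <> k -> u l = v l.
Definition Diag (k l : I3) : vec -> Prop := fun v => v k = v l.

Definition cyl_closed (F : (vec -> Prop) -> Prop) : Prop :=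
  (forall G : (vec -> Prop) -> Prop, (forall Y, G Y -> F Y) ->
      F (fun v => exists Y, G Y /\ Y v)) /\
  (forall X, F X -> F (fun v => ~ X v)) /\
  (forall k X, F X -> F (Cyl k X)) /\
  (forall k l, F (Diag k l)).

Definition inC (X : vec -> Prop) : Prop :=
  forall F, cyl_closed F -> (forall t, inB t -> F (Rt t)) -> F X.

Definition inRc (X : vec -> Prop) : Prop := inC X /\ (forall v, X v -> VB v).
Definition Rc_union (X Y : vec -> Prop) : vec -> Prop := fun v => X v \/ Y v.
Definition Rc_inter (X Y : vec -> Prop) : vec -> Prop := fun v => X v /\ Y v.
Definition Rc_compl (X : vec -> Prop) : vec -> Prop := fun v => VB v /\ ~ X v.
Definition Rc_empty : vec -> Prop := fun _ => False.
Definition Rc_full : vec -> Prop := VB.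
Definition Rc_cyl (k : I3) (X : vec -> Prop) : vec -> Prop :=
  fun v => VB v /\ Cyl k X v.
Definition Rc_diag (k l : I3) : vec -> Prop := fun v => VB v /\ Diag k l v.

Definition Rmap (X : tri -> Prop) : vec -> Prop :=
  fun v => exists t, X t /\ Rt t v.

Definition Rmap_iso : Prop :=
  (forall X, subB X -> inRc (Rmap X)) /\
  (forall X Y, subB X -> subB Y -> Rmap X = Rmap Y -> X = Y) /\
  (forall Y, inRc Y -> exists X, subB X /\ Rmap X = Y) /\
  (forall X Y, subB X -> subB Y -> Rmap (Cm_union X Y) = Rc_union (Rmap X) (Rmap Y)) /\
  (forall X Y, subB X -> subB Y -> Rmap (Cm_inter X Y) = Rc_inter (Rmap X) (Rmap Y)) /\
  (forall X, subB X -> Rmap (Cm_compl X) = Rc_compl (Rmap X)) /\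
  Rmap Cm_empty = Rc_empty /\
  Rmap Cm_full = Rc_full /\
  (forall k X, subB X -> Rmap (Tstar k X) = Rc_cyl k (Rmap X)) /\
  (forall k l, Rmap (E k l) = Rc_diag k l).

End Suitable.

(* Every approx-class of trails is a vertex of one large network.  Walking a
   trail with its detours cancelled, each step keeps two vertices of the current
   triangle and either creates the third or identifies it, via [E], with a kept
   one; the resulting name of the vertex a trail ends at is invariant under
   approx.  In an atomic weakly associative algebra the labels of a triangle are
   determined by the names of its vertices (equal names carry the unique identity
   atom under their domain), so the [R_t] are nonempty and pairwise disjoint, and
   rules (b) and (c) make [R] carry [T_k^*] to [C_k] and [E_kl] to [D_kl].
   For surjectivity, two members of one [R_t] are exchanged by the permutation of
   [U] that prepends a detour out along one trail and back along the other; it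
   fixes every [R_t], hence every element of [C], which is thus a union of [R_t]. *)

From Stdlib Require Import List ClassicalEpsilon Lia FunctionalExtensionality PropExtensionality ProofIrrelevance.
Import ListNotations.

Section Huntington.
Variable A : Type.
Variable p : A -> A -> A.
Variable n : A -> A.
Hypothesis p_comm : forall x y, p x y = p y x.
Hypothesis p_assoc : forall x y z, p x (p y z) = p (p x y) z.
Hypothesis huntington : forall x y, p (n (p (n x) (n y))) (n (p (n x) y)) = x.

(* Huntington's axioms make a Boolean algebra.  Each proof hands congruence
   closure exactly the axiom instances used by an equational derivation. *)
Lemma huntington_join_compl_const x y : p x (n x) = p y (n y).
Proof.
pose proof (huntington x y). pose proof (huntington x (n y)).
pose proof (huntington (n x) (n y)). pose proof (huntington y (n x)).
pose proof (huntington (n y) (n x)). pose proof (p_comm (n x) x).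
pose proof (p_assoc (n (p (n (n x)) (n (n y)))) (n (p (n (n x)) (n y))) x).
pose proof (p_comm (n x) (n y)). pose proof (p_comm (n x) (n (n y))).
pose proof (p_comm (n (p (n x) (n (n y)))) (n (p (n x) (n y)))).
pose proof (p_comm (n (n x)) (n y)). pose proof (p_comm (n (n x)) (n (n y))).
pose proof (p_comm (n (p (n (n y)) (n (n x)))) (n (p (n (n y)) (n x)))).
pose proof (p_assoc (n (p (n (n x)) (n y))) (n (p (n x) (n y))) (n (p (n x) y))).
pose proof (p_assoc (n (p (n (n x)) (n y))) (n (p (n x) (n y))) (n (p (n x) (n (n y))))).
pose proof (p_comm (n (p (n (n x)) (n (n y)))) (p y (n (p (n x) y)))).
pose proof (p_assoc y (n (p (n x) (n (n y)))) (n (p (n (n x)) (n (n y))))).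
congruence.
Qed.

Lemma huntington_compl_invol x : n (n x) = x.
Proof.
pose proof huntington_join_compl_const as J.
pose proof (huntington (n (n x)) (n x)). pose proof (J x (n x)). pose proof (J x (n (n x))).
pose proof (p_comm (n x) (n (n (n x)))).
pose proof (p_comm (n (p (n x) (n (n (n x))))) (n (p (n x) (n (n x))))).
pose proof (huntington x (n (n x))). pose proof (p_comm (n (n x)) (n (n (n x)))).
congruence.
Qed.

Lemma huntington_join_idem x : p x x = x.
Proof.
pose proof huntington_compl_invol as N. pose proof huntington_join_compl_const as J.
pose proof (huntington x (p x x)). pose proof (huntington (p x x) x).
pose proof (J x x). pose proof (J (p x x) x). pose proof (N x).
pose proof (p_comm (n x) x). pose proof (p_comm (n x) (n (p x x))).
pose proof (p_comm (n (p x x)) (p x x)).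
pose proof (huntington x (n x)). pose proof (huntington (n x) x).
pose proof (huntington (n x) (n x)). pose proof (J (n (p (n x) x)) x).
pose proof (N (p (n x) x)).
pose proof (p_assoc (n (p (n x) x)) (n (p x x)) (n x)).
pose proof (p_assoc (n (p (n x) x)) (n (p x x)) (p x x)).
pose proof (p_comm (n (p (n x) (n (p x x)))) (n (p (n x) (p x x)))).
pose proof (p_assoc (n (p x x)) (n (p (n x) x)) (n (p (n x) (n x)))).
pose proof (huntington (p (n x) x) (p (n x) (n (p x x)))).
congruence.
Qed.

Lemma huntington_join_bot_r x y : p x (n (p y (n y))) = x.
Proof.
pose proof huntington_compl_invol as N. pose proof huntington_join_compl_const as J.
pose proof (p_comm y (n y)). pose proof (huntington x x). pose proof (J (n y) x).
pose proof (N x). pose proof (N y). pose proof (J (p (n x) (n x)) x).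
pose proof (huntington_join_idem (n x)).
congruence.
Qed.

Lemma huntington_join_top_r x y : p x (p y (n y)) = p y (n y).
Proof.
pose proof (huntington_join_compl_const y x). pose proof (huntington_join_idem x). pose proof (p_assoc x x (n x)).
congruence.
Qed.

Lemma huntington_join_absorb x y : p x (n (p (n x) y)) = x.
Proof.
pose proof (huntington x y). pose proof (huntington_join_idem (n (p (n x) y))).
pose proof (p_assoc (n (p (n x) (n y))) (n (p (n x) y)) (n (p (n x) y))).
congruence.
Qed.
End Huntington.

Section WeakRelationAlgebra.
Variable W : WA.
Local Notation p := (plus W).
Local Notation n := (compl W).
Local Notation c := (comp W).
Local Notation v := (conv W).
Local Notation i1 := (id1 W).
Local Notation le := (leq W).
Local Notation one := (one W).
Local Notation zero := (zero W).
Local Notation mt := (meet W).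

Lemma join_comm x y : p x y = p y x. Proof. apply (wa_axioms W). Qed.
Lemma join_assoc x y z : p x (p y z) = p (p x y) z. Proof. apply (wa_axioms W). Qed.
Lemma huntington x y : p (n (p (n x) (n y))) (n (p (n x) y)) = x.
Proof. apply (wa_axioms W). Qed.
Lemma wa_law x : c (c (mt x i1) one) one = c (mt x i1) one.
Proof. apply (wa_axioms W). Qed.
Lemma comp_joinl x y z : c (p x y) z = p (c x z) (c y z). Proof. apply (wa_axioms W). Qed.
Lemma comp_id_r x : c x i1 = x. Proof. apply (wa_axioms W). Qed.
Lemma conv_invol x : v (v x) = x. Proof. apply (wa_axioms W). Qed.
Lemma conv_join x y : v (p x y) = p (v x) (v y). Proof. apply (wa_axioms W). Qed.
Lemma conv_comp x y : v (c x y) = c (v y) (v x). Proof. apply (wa_axioms W). Qed.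
Lemma conv_comp_compl x y : p (c (v x) (n (c x y))) (n y) = n y.
Proof. apply (wa_axioms W). Qed.

Lemma join_compl x : p x (n x) = one.
Proof. apply (huntington_join_compl_const _ _ _ join_comm join_assoc huntington). Qed.
Lemma compl_invol x : n (n x) = x.
Proof. apply (huntington_compl_invol _ _ _ join_comm join_assoc huntington). Qed.
Lemma join_idem x : p x x = x.
Proof. apply (huntington_join_idem _ _ _ join_comm join_assoc huntington). Qed.
Lemma join_zero_r x : p x zero = x.
Proof. apply (huntington_join_bot_r _ _ _ join_comm join_assoc huntington). Qed.
Lemma join_zero_l x : p zero x = x.
Proof. rewrite join_comm; apply join_zero_r. Qed.
Lemma compl_zero : n zero = one.
Proof. apply compl_invol. Qed.

Lemma le_refl x : le x x. Proof. apply join_idem. Qed.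
Lemma le_trans x y z : le x y -> le y z -> le x z.
Proof. unfold leq; intros H1 H2. rewrite <- H2, join_assoc, H1. reflexivity. Qed.
Lemma le_antisym x y : le x y -> le y x -> x = y.
Proof. unfold leq; intros H1 H2. rewrite <- H1, join_comm. symmetry. exact H2. Qed.
Lemma le_one x : le x one.
Proof. apply (huntington_join_top_r _ _ _ join_comm join_assoc huntington). Qed.
Lemma zero_le x : le zero x. Proof. apply join_zero_l. Qed.
Lemma meet_comm x y : mt x y = mt y x. Proof. unfold meet. rewrite join_comm. reflexivity. Qed.
Lemma meet_le_l x y : le (mt x y) x.
Proof. unfold leq, meet. rewrite join_comm. apply (huntington_join_absorb _ _ _ join_comm join_assoc huntington). Qed.
Lemma meet_le_r x y : le (mt x y) y.
Proof. rewrite meet_comm. apply meet_le_l. Qed.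
Lemma compl_le x y : le x y -> le (n y) (n x).
Proof.
unfold leq; intros H. rewrite <- H.
replace (n (p x y)) with (mt (n x) (n y)) by (unfold meet; rewrite !compl_invol; reflexivity).
apply meet_le_l.
Qed.
Lemma le_compl_sym x y : le x (n y) -> le y (n x).
Proof. intros H. apply compl_le in H. rewrite compl_invol in H. exact H. Qed.
Lemma le_compl_self x : le x (n x) -> x = zero.
Proof. unfold leq. intros H. rewrite join_compl in H. rewrite <- (compl_invol x), <- H. reflexivity. Qed.
Lemma le_and_compl x y : le x y -> le x (n y) -> x = zero.
Proof.
intros H1 H2. apply le_compl_self. apply le_compl_sym in H2. eapply le_trans; eauto.
Qed.
Lemma meet_split x z : x = p (mt x z) (mt x (n z)).
Proof. unfold meet. rewrite compl_invol. symmetry. apply huntington. Qed.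
Lemma meet_l_of_le x y : le x y -> mt x y = x.
Proof.
intros H. apply compl_le in H. unfold leq in H. unfold meet.
rewrite join_comm, H, compl_invol. reflexivity.
Qed.
Lemma le_zero_eq x : le x zero -> x = zero.
Proof. intros H. apply le_antisym; [exact H | apply zero_le]. Qed.
Lemma meet_zero_le_compl w x : mt w x = zero -> le x (n w).
Proof. intros E. rewrite (meet_split x w), meet_comm, E, join_zero_l. apply meet_le_r. Qed.
Lemma join_one_le x y : p x y = one -> le (n x) y.
Proof.
intros E. rewrite (meet_split (n x) y).
replace (mt (n x) (n y)) with zero.
- rewrite join_zero_r. apply meet_le_r.
- unfold meet. rewrite !compl_invol, E. reflexivity.
Qed.

Lemma atom_le_eq a b : atom W a -> atom W b -> le a b -> a = b.
Proof. intros [Ha _] [_ Hb] H. destruct (Hb a H); [contradiction | auto]. Qed.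
Lemma atom_le_or_compl a z : atom W a -> le a z \/ le a (n z).
Proof.
intros [Hnz Hat]. destruct (Hat (mt a z) (meet_le_l a z)) as [E|E].
- right. rewrite (meet_split a z), E, join_zero_l. apply meet_le_r.
- left. rewrite <- E. apply meet_le_r.
Qed.

Lemma conv_id : v i1 = i1.
Proof.
pose proof (comp_id_r (v i1)) as H. apply (f_equal v) in H.
rewrite conv_comp, conv_invol, comp_id_r in H. exact H.
Qed.
Lemma comp_id_l x : c i1 x = x.
Proof. rewrite <- (conv_invol (c i1 x)), conv_comp, conv_id, comp_id_r, conv_invol. reflexivity. Qed.
Lemma comp_joinr x y z : c x (p y z) = p (c x y) (c x z).
Proof. rewrite <- (conv_invol (c x (p y z))), conv_comp, conv_join, comp_joinl, conv_join, !conv_comp, !conv_invol. reflexivity. Qed.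
Lemma comp_mono_l x y z : le x y -> le (c x z) (c y z).
Proof. unfold leq; intros H. rewrite <- comp_joinl, H. reflexivity. Qed.
Lemma comp_mono_r x y z : le x y -> le (c z x) (c z y).
Proof. unfold leq; intros H. rewrite <- comp_joinr, H. reflexivity. Qed.
Lemma conv_mono x y : le x y -> le (v x) (v y).
Proof. unfold leq; intros H. rewrite <- conv_join, H. reflexivity. Qed.
Lemma conv_zero : v zero = zero.
Proof. apply le_zero_eq. pose proof (conv_mono _ _ (zero_le (v zero))) as H. rewrite conv_invol in H. exact H. Qed.
Lemma conv_one : v one = one.
Proof.
apply le_antisym; [apply le_one|].
pose proof (conv_mono _ _ (le_one (v one))) as H. rewrite conv_invol in H. exact H.
Qed.
Lemma atom_conv a : atom W a -> atom W (v a).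
Proof.
intros [Hnz Hat]. split.
- intros E. apply Hnz. rewrite <- (conv_invol a), E, conv_zero. reflexivity.
- intros y Hy. apply conv_mono in Hy. rewrite conv_invol in Hy.
  destruct (Hat _ Hy) as [E|E]; [left | right]; rewrite <- (conv_invol y), E.
  + apply conv_zero.
  + reflexivity.
Qed.
Lemma conv_compl x : v (n x) = n (v x).
Proof.
apply le_antisym.
- set (w := mt (v (n x)) (v x)).
  assert (Hw : w = zero).
  { assert (H1 := conv_mono _ _ (meet_le_l (v (n x)) (v x))).
    assert (H2 := conv_mono _ _ (meet_le_r (v (n x)) (v x))). rewrite conv_invol in H1, H2.
    fold w in H1, H2. rewrite <- (conv_invol w), (le_and_compl _ _ H2 H1), conv_zero. reflexivity. }
  rewrite (meet_split (v (n x)) (v x)). fold w. rewrite Hw, join_zero_l. apply meet_le_r.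
- apply join_one_le. rewrite <- conv_join, join_compl, conv_one. reflexivity.
Qed.

Lemma schroeder_l x y z : le z (n (c x y)) -> le (c (v x) z) (n y).
Proof. intros H. eapply le_trans; [apply comp_mono_r; exact H | apply conv_comp_compl]. Qed.
Lemma schroeder_r x y z : le z (n (c x y)) -> le (c z (v y)) (n x).
Proof.
intros H. apply conv_mono in H. rewrite conv_compl, conv_comp in H.
apply schroeder_l in H. rewrite conv_invol in H. apply conv_mono in H.
rewrite conv_comp, conv_invol, conv_compl, conv_invol in H. exact H.
Qed.
Lemma comp_subid_r e x : le e i1 -> le (c x e) x.
Proof. intros H. rewrite <- (comp_id_r x) at 2. apply comp_mono_r; auto. Qed.
Lemma comp_subid_l e x : le e i1 -> le (c e x) x.
Proof. intros H. rewrite <- (comp_id_l x) at 2. apply comp_mono_l; auto. Qed.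
Lemma le_comp_one x : le x (c x one).
Proof. rewrite <- (comp_id_r x) at 1. apply comp_mono_r, le_one. Qed.

Lemma cycle_l a b d : atom W a -> atom W b -> atom W d -> le d (c a b) -> le b (c (v a) d).
Proof.
intros Ha Hb Hd H. destruct (atom_le_or_compl b (c (v a) d) Hb) as [H1|H1]; auto. exfalso.
apply comp_mono_r with (z := a) in H1. pose proof (conv_comp_compl (v a) d) as H2.
rewrite conv_invol in H2.
assert (H3 : le d (n d)) by (eapply le_trans; [exact H|]; eapply le_trans; [exact H1 | exact H2]).
apply le_compl_self in H3. destruct Hd; auto.
Qed.
Lemma cycle_r a b d : atom W a -> atom W b -> atom W d -> le d (c a b) -> le a (c d (v b)).
Proof.
intros Ha Hb Hd H. apply conv_mono in H. rewrite conv_comp in H.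
apply cycle_l in H; try apply atom_conv; auto. rewrite conv_invol in H.
apply conv_mono in H. rewrite conv_comp, !conv_invol in H. exact H.
Qed.

Definition idatom (e : W) : Prop := atom W e /\ le e i1.

Lemma comp_idatom_neq e e' : idatom e -> idatom e' -> e <> e' -> c e' e = zero.
Proof.
intros [He Hei] [He' Hei'] Hne.
assert (H1 : le (c e' e) e') by (apply comp_subid_r; auto).
assert (H2 : le (c e' e) e) by (apply comp_subid_l; auto).
destruct He as [Hnz Hat]. destruct (Hat _ H2) as [E|E]; auto.
exfalso. apply Hne. rewrite E in H1. apply atom_le_eq; auto. split; auto.
Qed.
Lemma conv_idatom e : idatom e -> v e = e.
Proof.
intros He. destruct (classic (v e = e)) as [E|Hne]; auto. exfalso.
assert (Hve : idatom (v e)).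
{ destruct He as [Ha Hle]. split; [apply atom_conv; auto|]. rewrite <- conv_id. apply conv_mono; auto. }
pose proof (comp_idatom_neq _ _ Hve He Hne) as Z.
assert (H : le (c (v e) one) (n (v e))) by (apply schroeder_l; rewrite Z, compl_zero; apply le_refl).
assert (H' : le (v e) (n (v e))) by (eapply le_trans; [apply le_comp_one | exact H]).
apply le_compl_self in H'. destruct Hve as [[Hnz _] _]. auto.
Qed.

(* The only use of weak associativity. *)
Lemma subid_comp_one_one e : le e i1 -> c (c e one) one = c e one.
Proof. intros H. rewrite <- (meet_l_of_le _ _ H). apply wa_law. Qed.
Lemma comp_le_domain x y e : le e i1 -> le x (c e one) -> le (c x y) (c e one).
Proof.
intros He H. eapply le_trans; [apply comp_mono_l; exact H|].
rewrite <- (subid_comp_one_one e He) at 2. apply comp_mono_r, le_one.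
Qed.
Lemma domain_unique e e' a : idatom e -> idatom e' -> atom W a ->
  le a (c e one) -> le a (c e' one) -> e = e'.
Proof.
intros He He' Ha H1 H2. destruct (classic (e = e')) as [E|Hne]; auto. exfalso.
pose proof (comp_idatom_neq _ _ He He' Hne) as Z.
assert (H3 : le (c e' one) (n e)).
{ rewrite <- (conv_idatom e' He'). apply schroeder_l. rewrite Z, compl_zero. apply le_refl. }
apply le_compl_sym in H3. rewrite <- (subid_comp_one_one e') in H3 by apply He'.
apply schroeder_r in H3. rewrite conv_one in H3.
assert (a = zero) by (apply (le_and_compl a (c e' one)); [exact H2 | eapply le_trans; [exact H1 | exact H3]]).
destruct Ha; auto.
Qed.
Lemma domain_exists a : atomic W -> atom W a -> exists e, idatom e /\ le a (c e one).
Proof.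
intros Hat Ha. set (z := mt (c a (v a)) i1).
destruct (classic (z = zero)) as [Z|Hz].
- exfalso. apply meet_zero_le_compl, schroeder_r in Z. rewrite comp_id_l, conv_invol in Z.
  apply le_compl_self in Z. destruct Ha; auto.
- destruct (Hat z Hz) as [e [He Hle]]. exists e.
  assert (H1 : le e (c a (v a))) by (eapply le_trans; [exact Hle | apply meet_le_l]).
  assert (H2 : le e i1) by (eapply le_trans; [exact Hle | apply meet_le_r]).
  split; [split; auto|].
  apply cycle_r in H1; try apply atom_conv; auto. rewrite conv_invol in H1.
  eapply le_trans; [exact H1 | apply comp_mono_r, le_one].
Qed.
End WeakRelationAlgebra.

Definition I3_eq_dec (a b : I3) : {a = b} + {a <> b}.
Proof. decide equality. Defined.

Ltac destruct_I3 := repeat match goal with a : I3 |- _ => destruct a end; try congruence.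

Section Triangles.
Variable W : WA.
Local Notation c := (comp W).
Local Notation v := (conv W).
Local Notation i1 := (id1 W).
Local Notation le := (leq W).

(* A triangle [t] is read as a network on the vertices 0, 1, 2: the edge
   [0 -> 1] is labelled [t_2], [1 -> 2] is [t_0] and [0 -> 2] is [t_1]. *)
Definition edge (t : tri W) (a b : I3) : W :=
  match a, b with
  | I0, I1 => t I2 | I1, I0 => v (t I2)
  | I1, I2 => t I0 | I2, I1 => v (t I0)
  | I0, I2 => t I1 | I2, I0 => v (t I1)
  | _, _ => i1
  end.

Lemma edge_atom t a b : inB W t -> a <> b -> atom W (edge t a b).
Proof. intros [Ha _] Hab. destruct_I3; simpl; auto; apply atom_conv; auto. Qed.

Lemma edge_conv t a b : a <> b -> edge t b a = v (edge t a b).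
Proof. intros. destruct_I3; simpl; rewrite ?conv_invol; auto. Qed.

Lemma edge_le_comp t a b d : inB W t -> a <> b -> b <> d -> a <> d ->
  le (edge t a d) (c (edge t a b) (edge t b d)).
Proof.
intros [Hat Hle] Hab Hbd Had.
assert (A0 := Hat I0). assert (A1 := Hat I1). assert (A2 := Hat I2).
assert (C1 := cycle_l _ _ _ _ A2 A0 A1 Hle).
assert (C2 := cycle_r _ _ _ _ A2 A0 A1 Hle).
assert (V0 := conv_mono _ _ _ Hle). rewrite conv_comp in V0.
assert (V1 := conv_mono _ _ _ C1). rewrite conv_comp, conv_invol in V1.
assert (V2 := conv_mono _ _ _ C2). rewrite conv_comp, conv_invol in V2.
destruct_I3; simpl; auto.
Qed.

Lemma T_edge t s l a b : T W l t s -> a <> l -> b <> l -> a <> b -> edge t a b = edge s a b.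
Proof. intros [_ [_ H]] Ha Hb Hab. destruct_I3; simpl; rewrite H; auto. Qed.

Lemma tri_eq_of_edges (t t' : tri W) : (forall a b, a <> b -> edge t a b = edge t' a b) -> t = t'.
Proof.
intros H. apply functional_extensionality_dep. intros x.
destruct x; [apply (H I1 I2) | apply (H I0 I2) | apply (H I0 I1)]; congruence.
Qed.

Lemma tri_eq_at_of_edges k (t t' : tri W) :
  (forall a b, a <> k -> b <> k -> a <> b -> edge t a b = edge t' a b) -> t k = t' k.
Proof. intros H. destruct k; [apply (H I1 I2) | apply (H I0 I2) | apply (H I0 I1)]; congruence. Qed.

Lemma E_edge_le_id t a b : E W a b t -> a <> b -> le (edge t a b) i1.
Proof.
intros [_ H] Hab. specialize (H Hab).
destruct_I3; simpl in *; auto; rewrite <- conv_id; apply conv_mono; auto.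
Qed.

Lemma edge_le_id_E t a b : inB W t -> a <> b -> le (edge t a b) i1 -> E W a b t.
Proof.
intros Ht Hab H. split; auto. intros _.
destruct_I3; simpl in *; auto; apply conv_mono in H; rewrite conv_invol, conv_id in H; auto.
Qed.

Lemma E_refl t a : inB W t -> E W a a t.
Proof. intros Ht. split; auto. congruence. Qed.

Lemma E_sym t a b : E W a b t -> E W b a t.
Proof. intros [Ht H]. split; auto. intros Hba. destruct_I3; simpl in *; auto. Qed.

Lemma edge_idatom s a b : inB W s -> E W a b s -> a <> b -> idatom W (edge s a b).
Proof. intros. split; [apply edge_atom | apply E_edge_le_id]; auto. Qed.

Lemma edge_E_l s a b d : inB W s -> E W a b s -> a <> d -> b <> d -> edge s a d = edge s b d.
Proof.
intros Hs HE Had Hbd. destruct (I3_eq_dec a b) as [->|Hab]; auto.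
apply atom_le_eq; try apply edge_atom; auto.
eapply le_trans; [apply (edge_le_comp s a b d); auto|].
apply comp_subid_l, E_edge_le_id; auto.
Qed.

Lemma edge_E_r s a b d : inB W s -> E W a b s -> a <> d -> b <> d -> edge s d a = edge s d b.
Proof. intros. rewrite (edge_conv s a d), (edge_conv s b d) by auto. f_equal. apply edge_E_l; auto. Qed.

Lemma edge_E_flip s a b : inB W s -> E W a b s -> a <> b -> edge s b a = edge s a b.
Proof. intros. rewrite edge_conv by auto. apply conv_idatom, edge_idatom; auto. Qed.

Lemma edge_E2 s a a' d d' : inB W s -> E W a a' s -> E W d d' s -> a <> d -> a' <> d' ->
  edge s a d = edge s a' d'.
Proof.
intros Hs H1 H2 Had Had'. destruct (I3_eq_dec d a') as [->|Hne].
- destruct (I3_eq_dec d' a) as [->|Hne2].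
  + apply edge_E_flip; auto.
  + rewrite (edge_E_r s a' d' a) by auto. apply edge_E_l; auto.
- rewrite (edge_E_l s a a' d) by auto. apply edge_E_r; auto.
Qed.

Lemma E_trans s a b d : inB W s -> E W a b s -> E W b d s -> E W a d s.
Proof.
intros Hs H1 H2. destruct (I3_eq_dec a d) as [->|Had]; [apply E_refl; auto|].
destruct (I3_eq_dec a b) as [->|Hab]; auto.
destruct (I3_eq_dec b d) as [->|Hbd]; auto.
apply edge_le_id_E; auto. eapply le_trans; [apply (edge_le_comp s a b d); auto|].
eapply le_trans; [apply comp_mono_l, E_edge_le_id; eauto|].
rewrite comp_id_l. apply E_edge_le_id; auto.
Qed.

Lemma E_T_iff l t s a d : T W l t s -> a <> l -> d <> l -> (E W a d t <-> E W a d s).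
Proof.
intros HT Ha Hd. destruct (I3_eq_dec a d) as [->|Had].
- destruct HT as [Ht [Hs _]]. split; intros; apply E_refl; auto.
- assert (He : edge t a d = edge s a d) by (apply (T_edge t s l); auto).
  destruct HT as [Ht [Hs _]].
  split; intros H; apply edge_le_id_E; auto; [rewrite <- He | rewrite He]; apply E_edge_le_id; auto.
Qed.
End Triangles.

Section Names.
Variable W : WA.
Local Notation c := (comp W).
Local Notation i1 := (id1 W).
Local Notation le := (leq W).
Local Notation one := (one W).
Local Notation emi := excluded_middle_informative.
Local Notation edge := (edge W).
Local Notation stack := (list (tri W * I3)).

Definition other1 (l : I3) : I3 := match l with I0 => I1 | I1 => I0 | I2 => I0 end.
Definition other2 (l : I3) : I3 := match l with I0 => I2 | I1 => I2 | I2 => I1 end.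

Lemma other_cases l j : j <> l -> j = other1 l \/ j = other2 l.
Proof. intros; destruct_I3; simpl; auto. Qed.
Lemma other1_neq l : other1 l <> l. Proof. destruct_I3; simpl; congruence. Qed.
Lemma other2_neq l : other2 l <> l. Proof. destruct_I3; simpl; congruence. Qed.

Lemma I3_avoid2 (a l : I3) : a <> l -> exists nu : I3, nu <> a /\ nu <> l.
Proof.
intros; destruct_I3;
  first [exists I0; split; congruence | exists I1; split; congruence | exists I2; split; congruence].
Qed.

(* A trail is processed as a stack, most recent triangle first: [(s, k) :: (t, l) :: _]
   means that [s] was reached from [t] by a [T_l]-step.  Walking along the trail
   builds a network in which each step keeps two vertices and creates the third
   one, unless it is [E]-identified with a kept vertex.  A vertex is named by the
   initial triangle and a position, or by the triangle and stack where it was born. *)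
Inductive name := NInit (t0 : tri W) (j : I3) | NBirth (s : tri W) (b : stack).

Definition E_rep (s : tri W) (a : I3) : I3 :=
  if emi (E W I0 a s) then I0 else if emi (E W I1 a s) then I1 else I2.

Fixpoint names (st : stack) (a : I3) {struct st} : name :=
  match st with
  | [] => NInit (fun _ => i1) a
  | (s, _) :: b =>
    match b with
    | [] => NInit s (E_rep s a)
    | (t, l) :: _ =>
      if I3_eq_dec a l then
        (if emi (E W l (other1 l) s) then names b (other1 l)
         else if emi (E W l (other2 l) s) then names b (other2 l)
         else NBirth s b)
      else names b a
    end
  end.

Fixpoint is_stack (st : stack) : Prop :=
  match st with
  | [] => False
  | (s, _) :: b => match b with
                   | [] => inB W s
                   | (t, l) :: _ => inB W s /\ T W l t s /\ is_stack b
                   end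
  end.

Definition stack_top (st : stack) : tri W :=
  match st with (s, _) :: _ => s | [] => fun _ => i1 end.

Definition name_age (X : name) : nat :=
  match X with NInit _ _ => 0 | NBirth _ b => length b end.

Lemma names_top_idx s k k' b a : names ((s, k) :: b) a = names ((s, k') :: b) a.
Proof. destruct b; reflexivity. Qed.

Lemma names_step s k t l r a : names ((s, k) :: (t, l) :: r) a =
  (if I3_eq_dec a l then
     (if emi (E W l (other1 l) s) then names ((t, l) :: r) (other1 l)
      else if emi (E W l (other2 l) s) then names ((t, l) :: r) (other2 l)
      else NBirth s ((t, l) :: r))
   else names ((t, l) :: r) a).
Proof. reflexivity. Qed.

Lemma name_age_lt st a : st <> [] -> name_age (names st a) < length st.
Proof.
revert a. induction st as [|[s k] b IH]; intros a Hne; [congruence|].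
destruct b as [|[t l] r]; simpl; [lia|].
destruct (I3_eq_dec a l).
- destruct (emi _); [specialize (IH (other1 l) ltac:(discriminate)); simpl in *; lia|].
  destruct (emi _); [specialize (IH (other2 l) ltac:(discriminate)); simpl in *; lia|].
  simpl. lia.
- specialize (IH a ltac:(discriminate)). simpl in *. lia.
Qed.

Lemma birth_fresh s b d : b <> [] -> NBirth s b <> names b d.
Proof. intros Hb E0. pose proof (name_age_lt b d Hb) as H. rewrite <- E0 in H. simpl in H. lia. Qed.

Lemma stack_top_inB st : is_stack st -> inB W (stack_top st).
Proof. destruct st as [|[s k] [|[t l] r]]; simpl; tauto. Qed.

Lemma E_rep_E s a : inB W s -> E W a (E_rep s a) s.
Proof.
intros Hs. unfold E_rep. destruct (emi _) as [H|H]; [apply E_sym; auto|].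
destruct (emi _) as [H'|H']; [apply E_sym; auto|].
destruct a; [exfalso; apply H, E_refl | exfalso; apply H', E_refl | apply E_refl]; auto.
Qed.

Lemma E_rep_eq s a d : inB W s -> E W a d s -> E_rep s a = E_rep s d.
Proof.
intros Hs H. unfold E_rep.
destruct (emi (E W I0 a s)) as [H1|H1]; destruct (emi (E W I0 d s)) as [H2|H2]; auto.
- exfalso. apply H2. eapply E_trans; eauto.
- exfalso. apply H1. eapply E_trans; eauto. apply E_sym; auto.
- destruct (emi (E W I1 a s)) as [H3|H3]; destruct (emi (E W I1 d s)) as [H4|H4]; auto.
  + exfalso. apply H4. eapply E_trans; eauto.
  + exfalso. apply H3. eapply E_trans; eauto. apply E_sym; auto.
Qed.

Lemma names_eq_iff_E st : is_stack st -> forall a d, names st a = names st d <-> E W a d (stack_top st).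
Proof.
induction st as [|[s k] b IH]; intros Hv a d; [destruct Hv|].
destruct b as [|[t l] r].
- simpl in *. split; intro H.
  + injection H as H. eapply E_trans; [auto | apply E_rep_E; auto|].
    rewrite H. apply E_sym, E_rep_E; auto.
  + f_equal. apply E_rep_eq; auto.
- destruct Hv as [Hs [HT Hb]]. specialize (IH Hb). simpl stack_top in *.
  assert (moved : forall d, d <> l ->
    (names ((s, k) :: (t, l) :: r) l = names ((s, k) :: (t, l) :: r) d <-> E W l d s)).
  { intros d0 Hd. rewrite !names_step. destruct (I3_eq_dec l l) as [_|]; [|congruence].
    destruct (I3_eq_dec d0 l) as [|_]; [congruence|].
    destruct (emi (E W l (other1 l) s)) as [H1|H1]; [|destruct (emi (E W l (other2 l) s)) as [H2|H2]].
    - rewrite IH, (E_T_iff W l t s) by auto using other1_neq.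
      split; intro H; eapply E_trans; eauto. apply E_sym; auto.
    - rewrite IH, (E_T_iff W l t s) by auto using other2_neq.
      split; intro H; eapply E_trans; eauto. apply E_sym; auto.
    - split; intro H; exfalso.
      + exact (birth_fresh s ((t, l) :: r) d0 ltac:(discriminate) H).
      + destruct (other_cases l d0 Hd) as [->| ->]; auto. }
  destruct (I3_eq_dec a l) as [->|Ha]; destruct (I3_eq_dec d l) as [->|Hd].
  + split; intros; [apply E_refl; auto | reflexivity].
  + apply moved; auto.
  + split; intro H; [apply E_sym, moved; auto|]. apply E_sym in H. symmetry. apply moved; auto.
  + rewrite !names_step. destruct (I3_eq_dec a l); [congruence|]. destruct (I3_eq_dec d l); [congruence|].
    rewrite IH. apply (E_T_iff W l t s); auto.
Qed.

Definition pick_other (b : stack) (X : name) (l : I3) : option I3 :=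
  if emi (names b (other1 l) = X) then Some (other1 l)
  else if emi (names b (other2 l) = X) then Some (other2 l) else None.

Lemma pick_other_spec b X l m : pick_other b X l = Some m -> names b m = X /\ m <> l.
Proof.
unfold pick_other. destruct (emi _) as [H|H]; [intros [= <-]; split; auto using other1_neq|].
destruct (emi _) as [H'|H']; [intros [= <-]; split; auto using other2_neq | discriminate].
Qed.

Lemma pick_other_some b X l j : names b j = X -> j <> l -> exists m, pick_other b X l = Some m.
Proof.
intros H Hj. unfold pick_other. destruct (emi _); [eauto|]. destruct (emi _); [eauto|].
exfalso. destruct (other_cases l j Hj) as [->| ->]; auto.
Qed.

(* The label of the edge between two distinct named vertices, read off the
   triangle where the younger one was born. *)
Definition label_born (X Y : name) : W :=
  match X with
  | NBirth s ((t, l) :: r) =>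
      match pick_other ((t, l) :: r) Y l with Some m => edge s l m | None => i1 end
  | NInit t0 j => match Y with NInit _ j' => edge t0 j j' | _ => i1 end
  | _ => i1
  end.

Definition label (X Y : name) : W :=
  match Y with
  | NBirth s ((t, l) :: r) =>
      match pick_other ((t, l) :: r) X l with Some m => edge s m l | None => label_born X Y end
  | _ => label_born X Y
  end.

Lemma label_older_r s b X : name_age X < length b -> label (NBirth s b) X = label_born (NBirth s b) X.
Proof.
intros Hage. unfold label. destruct X as [t0 j|s' b']; [reflexivity|].
destruct b' as [|[t' l'] r']; [reflexivity|].
destruct (pick_other ((t', l') :: r') (NBirth s b) l') as [m|] eqn:Hp; [|reflexivity].
exfalso. apply pick_other_spec in Hp. destruct Hp as [Hp _].
pose proof (name_age_lt ((t', l') :: r') m ltac:(discriminate)) as H. rewrite Hp in H. simpl in *. lia.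
Qed.

Definition edges_labelled (st : stack) : Prop :=
  forall a d, a <> d -> names st a <> names st d ->
  edge (stack_top st) a d = label (names st a) (names st d).

Lemma edges_labelled_init s k : inB W s -> edges_labelled [(s, k)].
Proof.
intros Hs a d Had Hn. simpl in *. unfold label, label_born. apply edge_E2; auto using E_rep_E.
intro E0. apply Hn. rewrite E0. reflexivity.
Qed.

Section LabelStep.
Variables (s t : tri W) (k l : I3) (r : stack).
Hypothesis s_inB : inB W s.
Hypothesis step_T : T W l t s.
Hypothesis prev_stack : is_stack ((t, l) :: r).
Hypothesis prev_labelled : edges_labelled ((t, l) :: r).
Let t_inB : inB W t. Proof. apply step_T. Qed.
Let prev_E := names_eq_iff_E ((t, l) :: r) prev_stack.

Lemma edge_label_step_src d : d <> l ->
  names ((s, k) :: (t, l) :: r) l <> names ((s, k) :: (t, l) :: r) d ->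
  edge s l d = label (names ((s, k) :: (t, l) :: r) l) (names ((s, k) :: (t, l) :: r) d).
Proof.
intros Hd. rewrite !names_step. destruct (I3_eq_dec l l) as [_|]; [|congruence].
destruct (I3_eq_dec d l) as [|_]; [congruence|].
destruct (emi (E W l (other1 l) s)) as [H1|H1]; [|destruct (emi (E W l (other2 l) s)) as [H2|H2]].
- intros Hn. assert (Hd1 : other1 l <> d) by (intro; subst; auto).
  rewrite <- prev_labelled by auto. rewrite (edge_E_l W s l (other1 l) d) by auto using other1_neq.
  symmetry; apply (T_edge W t s l); auto using other1_neq.
- intros Hn. assert (Hd1 : other2 l <> d) by (intro; subst; auto).
  rewrite <- prev_labelled by auto. rewrite (edge_E_l W s l (other2 l) d) by auto using other2_neq.
  symmetry; apply (T_edge W t s l); auto using other2_neq.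
- intros _. rewrite label_older_r by (apply name_age_lt; discriminate).
  unfold label_born.
  destruct (pick_other_some ((t, l) :: r) (names ((t, l) :: r) d) l d eq_refl Hd) as [m Hm].
  rewrite Hm. apply pick_other_spec in Hm. destruct Hm as [Hm Hml].
  apply edge_E_r; auto. apply (E_T_iff W l t s); auto. apply prev_E. auto.
Qed.

Lemma edge_label_step_tgt a : a <> l ->
  names ((s, k) :: (t, l) :: r) a <> names ((s, k) :: (t, l) :: r) l ->
  edge s a l = label (names ((s, k) :: (t, l) :: r) a) (names ((s, k) :: (t, l) :: r) l).
Proof.
intros Ha. rewrite !names_step. destruct (I3_eq_dec l l) as [_|]; [|congruence].
destruct (I3_eq_dec a l) as [|_]; [congruence|].
destruct (emi (E W l (other1 l) s)) as [H1|H1]; [|destruct (emi (E W l (other2 l) s)) as [H2|H2]].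
- intros Hn. assert (Hd1 : a <> other1 l) by (intro; subst; auto).
  rewrite <- prev_labelled by auto. rewrite (edge_E_r W s l (other1 l) a) by auto using other1_neq.
  symmetry; apply (T_edge W t s l); auto using other1_neq.
- intros Hn. assert (Hd1 : a <> other2 l) by (intro; subst; auto).
  rewrite <- prev_labelled by auto. rewrite (edge_E_r W s l (other2 l) a) by auto using other2_neq.
  symmetry; apply (T_edge W t s l); auto using other2_neq.
- intros _. unfold label.
  destruct (pick_other_some ((t, l) :: r) (names ((t, l) :: r) a) l a eq_refl Ha) as [m Hm].
  rewrite Hm. apply pick_other_spec in Hm. destruct Hm as [Hm Hml].
  symmetry. apply edge_E_l; auto. apply (E_T_iff W l t s); auto. apply prev_E. auto.
Qed.

Lemma edges_labelled_step : edges_labelled ((s, k) :: (t, l) :: r).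
Proof.
intros a d Had. simpl stack_top.
destruct (I3_eq_dec a l) as [->|Ha]; [apply edge_label_step_src; auto|].
destruct (I3_eq_dec d l) as [->|Hd]; [apply edge_label_step_tgt; auto|].
rewrite !names_step. destruct (I3_eq_dec a l); [congruence|].
destruct (I3_eq_dec d l); [congruence|]. intros Hn.
rewrite <- prev_labelled by auto. symmetry. apply (T_edge W t s l); auto.
Qed.
End LabelStep.

Lemma edge_label st : is_stack st -> edges_labelled st.
Proof.
induction st as [|[s k] [|[t l] r] IH]; intros Hv; [destruct Hv | apply edges_labelled_init; exact Hv|].
destruct Hv as [Hs [HT Hb]]. apply edges_labelled_step; auto.
Qed.

Definition name_tri (X : name) : tri W := match X with NInit t _ => t | NBirth s _ => s end.
Definition name_pos (X : name) : I3 :=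
  match X with NInit _ j => j | NBirth _ ((_, l) :: _) => l | NBirth _ [] => I0 end.

Definition is_domain (X : name) (e : W) : Prop :=
  idatom W e /\ forall j, j <> name_pos X -> le (edge (name_tri X) (name_pos X) j) (c e one).
Definition domain (X : name) : W := epsilon (inhabits i1) (is_domain X).

Lemma domain_spec X : (exists e, is_domain X e) -> is_domain X (domain X).
Proof. intros H. unfold domain. apply epsilon_spec. exact H. Qed.

Lemma domain_spread s m e : inB W s -> le e i1 ->
  (exists j0, j0 <> m /\ le (edge s m j0) (c e one)) ->
  forall j, j <> m -> le (edge s m j) (c e one).
Proof.
intros Hs He [j0 [Hj0 H]] j Hj. destruct (I3_eq_dec j j0) as [->|Hne]; auto.
eapply le_trans; [apply (edge_le_comp W s m j0 j); auto | apply comp_le_domain; auto].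
Qed.

Lemma domain_spread_E s m a e : inB W s -> E W m a s -> le e i1 ->
  (forall j, j <> m -> le (edge s m j) (c e one)) ->
  forall j, j <> a -> le (edge s a j) (c e one).
Proof.
intros Hs HE He H. destruct (I3_eq_dec a m) as [->|Ham]; auto.
apply domain_spread; auto. exists m. split; auto. rewrite (edge_E_flip W s m a); auto.
Qed.

Hypothesis W_atomic : atomic W.

Lemma domain_exists_tri s m : inB W s ->
  exists e, idatom W e /\ forall j, j <> m -> le (edge s m j) (c e one).
Proof.
intros Hs. destruct (domain_exists W (edge s m (other1 m)) W_atomic) as [e [He H]].
{ apply edge_atom; auto using other1_neq. }
exists e. split; auto. apply domain_spread; auto; [apply He|].
exists (other1 m). split; auto using other1_neq.
Qed.

Lemma names_domain st : is_stack st -> forall a, idatom W (domain (names st a)) /\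
  forall j, j <> a -> le (edge (stack_top st) a j) (c (domain (names st a)) one).
Proof.
induction st as [|[s k] b IH]; intros Hv a; [destruct Hv|].
destruct b as [|[t l] r].
- simpl in *. destruct (domain_spec (NInit s (E_rep s a))) as [Hi Hd].
  { destruct (domain_exists_tri s (E_rep s a) Hv) as [e He]. exists e. exact He. }
  split; auto. apply (domain_spread_E s (E_rep s a)); auto; [apply E_sym, E_rep_E; auto | apply Hi].
- destruct Hv as [Hs [HT Hb]]. specialize (IH Hb). simpl stack_top in *.
  assert (Ht : inB W t) by (destruct HT; tauto).
  assert (kept : forall a, a <> l -> idatom W (domain (names ((s, k) :: (t, l) :: r) a)) /\
      forall j, j <> a -> le (edge s a j) (c (domain (names ((s, k) :: (t, l) :: r) a)) one)).
  { intros a0 Ha0. rewrite names_step. destruct (I3_eq_dec a0 l); [congruence|].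
    destruct (IH a0) as [Hi Hd]. split; auto. apply domain_spread; auto; [apply Hi|].
    destruct (I3_avoid2 a0 l Ha0) as [nu [H1 H2]]. exists nu. split; auto.
    rewrite <- (T_edge W t s l) by auto. apply Hd; auto. }
  destruct (I3_eq_dec a l) as [->|Ha]; [|apply kept; auto].
  rewrite names_step. destruct (I3_eq_dec l l) as [_|]; [|congruence].
  destruct (emi (E W l (other1 l) s)) as [H1|H1]; [|destruct (emi (E W l (other2 l) s)) as [H2|H2]].
  + destruct (kept (other1 l) (other1_neq l)) as [Hi Hd]. rewrite names_step in Hi, Hd.
    destruct (I3_eq_dec (other1 l) l) as [E0|_]; [exfalso; apply (other1_neq l); auto|].
    split; auto. apply (domain_spread_E s (other1 l)); auto; [apply E_sym; auto | apply Hi].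
  + destruct (kept (other2 l) (other2_neq l)) as [Hi Hd]. rewrite names_step in Hi, Hd.
    destruct (I3_eq_dec (other2 l) l) as [E0|_]; [exfalso; apply (other2_neq l); auto|].
    split; auto. apply (domain_spread_E s (other2 l)); auto; [apply E_sym; auto | apply Hi].
  + destruct (domain_spec (NBirth s ((t, l) :: r))) as [Hi Hd]; [|split; auto].
    destruct (domain_exists_tri s l Hs) as [e He]. exists e. exact He.
Qed.

(* Distinct names: the edge is their [label]; equal names: it is their common
   domain, the only identity atom below the edge. *)
Lemma edge_eq_of_names st1 st2 a d : is_stack st1 -> is_stack st2 -> a <> d ->
  names st1 a = names st2 a -> names st1 d = names st2 d ->
  edge (stack_top st1) a d = edge (stack_top st2) a d.
Proof.
intros H1 H2 Had Ea Ed.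
destruct (classic (names st1 a = names st1 d)) as [Eq|Ne].
- assert (Eq2 : names st2 a = names st2 d) by congruence.
  apply (names_eq_iff_E st1 H1) in Eq. apply (names_eq_iff_E st2 H2) in Eq2.
  assert (K : forall st, is_stack st -> E W a d (stack_top st) ->
            edge (stack_top st) a d = domain (names st a)).
  { intros st Hv HE. destruct (names_domain st Hv a) as [Hi Hd].
    apply (domain_unique W _ _ (edge (stack_top st) a d)); auto.
    - apply edge_idatom; auto. apply stack_top_inB; auto.
    - apply edge_atom; auto. apply stack_top_inB; auto.
    - apply le_comp_one. }
  rewrite (K st1), (K st2); auto. congruence.
- rewrite (edge_label st1), (edge_label st2); auto; congruence.
Qed.
End Names.

Section Last.
Variable A : Type.

Lemma last_cons_r (y : A) r x : last (y :: r) x = last r y.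
Proof.
revert y x. induction r as [|z r IH]; intros y x; [reflexivity|].
change (last (z :: r) x = last (z :: r) y). rewrite !IH. reflexivity.
Qed.

Lemma last_default (l : list A) x y : l <> [] -> last l x = last l y.
Proof. destruct l as [|z l]; [congruence|]. rewrite !last_cons_r. reflexivity. Qed.

Lemma last_app_r (l1 l2 : list A) d : l2 <> [] -> last (l1 ++ l2) d = last l2 d.
Proof.
intros H. induction l1 as [|y l1 IH]; [reflexivity|].
simpl app. rewrite last_cons_r, (last_default _ y d), IH; [reflexivity|].
intros E. apply app_eq_nil in E. tauto.
Qed.
End Last.

Section Reduction.
Variable W : WA.
Local Notation emi := excluded_middle_informative.
Local Notation i1 := (id1 W).
Local Notation step := (tri W * I3)%type.

(* Pushing [t] onto a stack whose top two steps are [(s, l) :: (t, l) :: _]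
   undoes a detour [t, l, s, l, t], as in rule (a). *)
Definition pop_detour (st : list step) (t : tri W) : list step :=
  match st with
  | (s, l1) :: (t', l2) :: rest => if emi (t = t' /\ l1 = l2) then rest else st
  | _ => st
  end.
Definition push (st : list step) (x : step) : list step := x :: pop_detour st (fst x).
Definition reduce (p : list step) : list step := fold_left push p [].

Fixpoint detour_free (st : list step) : Prop :=
  match st with
  | [] => True
  | x :: r =>
      (match r with (y, l) :: (z, l') :: _ => ~ (fst x = z /\ l = l') | _ => True end)
      /\ detour_free r
  end.

Lemma reduce_snoc l x : reduce (l ++ [x]) = push (reduce l) x.
Proof. unfold reduce. rewrite fold_left_app. reflexivity. Qed.

Lemma detour_free_push st x : detour_free st -> detour_free (push st x).
Proof.
intros H. unfold push, pop_detour.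
destruct st as [|[s l1] [|[t' l2] rest]]; simpl; auto.
destruct (emi _) as [[E1 E2]|Hn]; [|split; auto].
destruct H as [_ [H2 H3]]. split; auto.
destruct rest as [|[y l] [|[z l'] r']]; auto. simpl in H2. subst. auto.
Qed.

Lemma detour_free_reduce p : detour_free (reduce p).
Proof.
unfold reduce. generalize (I : detour_free []). generalize (@nil step).
induction p; simpl; auto using detour_free_push.
Qed.

Lemma push_detour st ti lam s ki : detour_free st ->
  push (push (push st (ti, lam)) (s, lam)) (ti, ki) = push st (ti, ki).
Proof.
intros Hr. unfold push. simpl fst.
destruct st as [|[u m] [|[w m'] [|[w2 m2] [|[w3 m3] r3]]]]; simpl in Hr;
repeat (simpl; match goal with |- context [emi ?P] => destruct (emi P) as [[? ?]|?]; subst end);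
try reflexivity; try (exfalso; tauto); try (exfalso; intuition congruence).
Qed.

Lemma reduce_detour l1 ti lam s ki l2 :
  reduce (l1 ++ (ti, lam) :: (s, lam) :: (ti, ki) :: l2) = reduce (l1 ++ (ti, ki) :: l2).
Proof. unfold reduce. rewrite !fold_left_app. simpl. rewrite push_detour; auto. apply detour_free_reduce. Qed.

Definition dummy_step : step := (fun _ => i1, I0).
Definition last_idx (p : list step) : I3 := snd (last p dummy_step).

Lemma last_idx_snoc l x : last_idx (l ++ [x]) = snd x.
Proof. unfold last_idx. rewrite last_last. reflexivity. Qed.

Lemma valid_from_app x r r' :
  valid_from W x (r ++ r') <-> valid_from W x r /\ valid_from W (last r x) r'.
Proof.
revert x. induction r as [|y r IH]; intros x; [simpl; tauto|].
rewrite last_cons_r. cbn [app valid_from]. rewrite IH. tauto.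
Qed.

Definition trail_step (z x : step) : Prop :=
  inB W (fst x) /\ fst z <> fst x /\ T W (snd z) (fst z) (fst x).

Lemma is_trail_app (l r : list step) : l <> [] -> r <> [] ->
  (is_trail W (l ++ r) <-> is_trail W l /\ is_trail W r /\ trail_step (last l dummy_step) (hd dummy_step r)).
Proof.
intros Hl Hr. destruct l as [|y l']; [congruence|]. destruct r as [|z r']; [congruence|].
change (is_trail W ((y :: l') ++ z :: r')) with (inB W (fst y) /\ valid_from W y (l' ++ z :: r')).
change (is_trail W (y :: l')) with (inB W (fst y) /\ valid_from W y l').
change (is_trail W (z :: r')) with (inB W (fst z) /\ valid_from W z r').
rewrite valid_from_app, last_cons_r. cbn [valid_from hd]. unfold trail_step. tauto.
Qed.

Lemma is_trail_snoc l x : l <> [] ->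
  (is_trail W (l ++ [x]) <-> is_trail W l /\ trail_step (last l dummy_step) x).
Proof. intros Hl. rewrite is_trail_app by (auto; discriminate). simpl. unfold trail_step. tauto. Qed.

Lemma is_trail_tail (x : step) r : r <> [] -> is_trail W (x :: r) -> is_trail W r.
Proof. destruct r as [|y r']; [congruence|]. simpl. tauto. Qed.

Lemma is_trail_last_idx (l : list step) t k k' : is_trail W (l ++ [(t, k)]) -> is_trail W (l ++ [(t, k')]).
Proof.
destruct l as [|y l']; [simpl; tauto|].
intros H. apply is_trail_snoc in H; [|discriminate]. apply is_trail_snoc; [discriminate|].
destruct H as [H1 H2]; split; auto.
Qed.

Lemma reduce_is_stack p : is_trail W p -> is_stack W (reduce p) /\ exists rest, reduce p = last p dummy_step :: rest.
Proof.
induction p as [|x l IH] using rev_ind; intros Hp; [destruct Hp|].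
rewrite reduce_snoc, last_last. unfold push.
destruct l as [|y l'] eqn:El.
- simpl. destruct x as [s k]. split; [|eauto]. simpl in Hp. tauto.
- rewrite <- El in *. apply is_trail_snoc in Hp; [|subst; discriminate]. destruct Hp as [Hl Hj].
  destruct (IH Hl) as [Hv [rest Hr]]. rewrite Hr in *.
  remember (last l dummy_step) as z. destruct z as [t k]. unfold trail_step in Hj. simpl in Hj.
  destruct Hj as [Hx [Hne HT]].
  destruct rest as [|[t' l2] rest'].
  + simpl. split; [|eauto]. destruct x as [s k0]; simpl in *. tauto.
  + simpl pop_detour. destruct (emi (fst x = t' /\ k = l2)) as [[E1 E2]|Hn].
    * split; [|eauto]. destruct x as [s k0]; simpl in E1; subst.
      destruct rest' as [|[t'' l3] r'']; simpl in *; tauto.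
    * split; [|eauto]. destruct x as [s k0]. simpl in *. tauto.
Qed.

Lemma reduce_snoc_top (l : list step) t k : is_trail W (l ++ [(t, k)]) ->
  is_stack W (reduce (l ++ [(t, k)])) /\ stack_top W (reduce (l ++ [(t, k)])) = t.
Proof.
intros H. destruct (reduce_is_stack _ H) as [Hv [rest Hr]]. split; auto.
rewrite Hr, last_last. reflexivity.
Qed.

Theorem approx_names p q : approx W p q ->
  names W (reduce p) (last_idx p) = names W (reduce q) (last_idx q).
Proof.
induction 1.
- reflexivity.
- auto.
- congruence.
- rewrite reduce_detour. f_equal. unfold last_idx. rewrite !last_app_r by discriminate. reflexivity.
- replace (l ++ [(tn, lam); (s, nu)]) with ((l ++ [(tn, lam)]) ++ [(s, nu)])
    by (rewrite <- app_assoc; reflexivity).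
  rewrite !last_idx_snoc, !reduce_snoc. simpl snd. unfold push. simpl fst.
  generalize (pop_detour (reduce l) tn) as R. intros R.
  destruct R as [|[w m] R'].
  + simpl pop_detour. rewrite (names_step W). destruct (I3_eq_dec nu lam); [congruence|].
    apply names_top_idx.
  + simpl pop_detour. destruct (emi (s = w /\ lam = m)) as [[-> <-]|Hn].
    * rewrite (names_step W tn nu w lam R'). destruct (I3_eq_dec nu lam); [congruence|].
      apply names_top_idx.
    * rewrite (names_step W s nu tn lam). destruct (I3_eq_dec nu lam); [congruence|].
      apply names_top_idx.
- rewrite !last_idx_snoc, !reduce_snoc. simpl snd. unfold push. simpl fst.
  destruct (reduce_is_stack _ H0) as [Hv _]. rewrite reduce_snoc in Hv. unfold push in Hv. simpl fst in Hv.
  rewrite (names_top_idx W tn kn lam). apply (names_eq_iff_E W _ Hv). exact H.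
Qed.
End Reduction.

Section Atoms.
Variable W : WA.
Local Notation step := (tri W * I3)%type.

Lemma setlast_snoc (l : list step) t k k' : setlast W (l ++ [(t, k)]) k' = l ++ [(t, k')].
Proof.
induction l as [|x l IH]; [reflexivity|]. simpl.
destruct (l ++ [(t, k)]) eqn:E; [destruct l; discriminate|].
rewrite <- IH. destruct x. reflexivity.
Qed.

Lemma UB_eq (x y : UB W) : proj1_sig x = proj1_sig y -> x = y.
Proof. destruct x as [x hx], y as [y hy]. simpl. intros ->. f_equal. apply proof_irrelevance. Qed.

Lemma cls_eq q1 q2 : approx W q1 q2 -> cls W q1 = cls W q2.
Proof.
intros H. apply functional_extensionality. intros r. apply propositional_extensionality.
unfold cls. split; intros H'; [exact (ap_trans W _ _ _ (ap_sym W _ _ H) H') | exact (ap_trans W _ _ _ H H')].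
Qed.

Lemma approx_of_cls_eq q1 q2 : is_trail W q2 -> cls W q1 = cls W q2 -> approx W q1 q2.
Proof. intros Hq E0. assert (H : cls W q2 q2) by (apply ap_refl; auto). rewrite <- E0 in H. exact H. Qed.

Lemma approx_trail p q : approx W p q -> is_trail W p /\ is_trail W q.
Proof. induction 1; tauto. Qed.

Definition point (q : list step) (Hq : is_trail W q) : UB W :=
  exist _ (cls W q) (ex_intro _ q (conj Hq eq_refl)).

Lemma Rt_inv t v : Rt W t v -> exists l k, is_trail W (l ++ [(t, k)]) /\
  forall a, proj1_sig (v a) = cls W (l ++ [(t, a)]).
Proof.
intros [p [Hp [[l [k ->]] Hv]]]. exists l, k. split; auto.
intros a. rewrite Hv, setlast_snoc. reflexivity.
Qed.

Lemma names_last_idx (l : list step) t k a :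
  names W (reduce W (l ++ [(t, k)])) a = names W (reduce W (l ++ [(t, a)])) (last_idx W (l ++ [(t, a)])).
Proof. rewrite last_idx_snoc, !reduce_snoc. unfold push. simpl. apply (names_top_idx W t k a). Qed.

Lemma names_of_cls_eq l1 t1 k1 l2 t2 k2 a :
  is_trail W (l2 ++ [(t2, k2)]) ->
  cls W (l1 ++ [(t1, a)]) = cls W (l2 ++ [(t2, a)]) ->
  names W (reduce W (l1 ++ [(t1, k1)])) a = names W (reduce W (l2 ++ [(t2, k2)])) a.
Proof.
intros H2 E0. apply approx_of_cls_eq in E0; [|exact (is_trail_last_idx W l2 t2 k2 a H2)].
rewrite (names_last_idx l1 t1 k1 a), (names_last_idx l2 t2 k2 a). apply approx_names. exact E0.
Qed.

Lemma Rt_edge t v t' u a d : atomic W -> Rt W t v -> Rt W t' u -> a <> d -> v a = u a -> v d = u d ->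
  edge W t a d = edge W t' a d.
Proof.
intros Hat H1 H2 Had Ea Ed.
destruct (Rt_inv t v H1) as [l1 [k1 [Hp1 Hv1]]].
destruct (Rt_inv t' u H2) as [l2 [k2 [Hp2 Hv2]]].
destruct (reduce_snoc_top W l1 t k1 Hp1) as [Hs1 Ht1].
destruct (reduce_snoc_top W l2 t' k2 Hp2) as [Hs2 Ht2].
rewrite <- Ht1, <- Ht2 at 1. apply (edge_eq_of_names W Hat); auto; apply names_of_cls_eq; auto;
  rewrite <- Hv1, <- Hv2; congruence.
Qed.

Lemma Rt_disjoint t t' v : atomic W -> Rt W t v -> Rt W t' v -> t = t'.
Proof.
intros Hat H1 H2. apply (tri_eq_of_edges W). intros a d Had.
exact (Rt_edge t v t' v a d Hat H1 H2 Had eq_refl eq_refl).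
Qed.

Lemma Rt_diag_E t v a d : Rt W t v -> v a = v d -> E W a d t.
Proof.
intros H Eq. destruct (Rt_inv t v H) as [l [k [Hp Hv]]].
destruct (reduce_snoc_top W l t k Hp) as [Hs Ht].
rewrite <- Ht at 1. apply (names_eq_iff_E W _ Hs). rewrite (names_last_idx l t k a), (names_last_idx l t k d).
apply approx_names, approx_of_cls_eq; [exact (is_trail_last_idx W l t k d Hp)|].
rewrite <- !Hv, Eq. reflexivity.
Qed.

Lemma Rt_E_diag t v a d : Rt W t v -> E W a d t -> v a = v d.
Proof.
intros H HE. destruct (Rt_inv t v H) as [l [k [Hp Hv]]]. apply UB_eq. rewrite !Hv.
apply cls_eq, ap_c; [exact HE | exact (is_trail_last_idx W l t k a Hp) | exact (is_trail_last_idx W l t k d Hp)].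
Qed.

Lemma Rt_nonempty t : inB W t -> exists v, Rt W t v.
Proof.
intros Ht. assert (Hq : forall a, is_trail W [(t, a)]) by (intros; split; [exact Ht | exact I]).
exists (fun a => point [(t, a)] (Hq a)). exists [(t, I0)].
split; [exact (Hq I0)|]. split; [exists [], I0; reflexivity | intros k; reflexivity].
Qed.

(* A [T_k]-step from [t] to [x] extends each trail ending at [t]; by rule (b)
   the new vertex sequence differs from the old one only at [k]. *)
Lemma Rt_step t v k x : Rt W t v -> T W k t x -> inB W x ->
  exists u, Rt W x u /\ forall l, l <> k -> u l = v l.
Proof.
intros H HT Hx. destruct (classic (x = t)) as [->|Hne]; [exists v; split; [exact H | reflexivity]|].
destruct (Rt_inv t v H) as [l0 [k0 [Hp Hv]]].
assert (Hq : forall a, is_trail W ((l0 ++ [(t, k)]) ++ [(x, a)])).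
{ intros a. apply is_trail_snoc; [destruct l0; discriminate|].
  split; [exact (is_trail_last_idx W l0 t k0 k Hp)|].
  rewrite last_last. unfold trail_step. simpl. auto. }
exists (fun a => point _ (Hq a)). split.
- exists ((l0 ++ [(t, k)]) ++ [(x, I0)]). split; [exact (Hq I0)|].
  split; [eexists _, _; reflexivity|]. intros a. simpl. rewrite setlast_snoc. reflexivity.
- intros l Hl. apply UB_eq. simpl. rewrite Hv. apply cls_eq.
  rewrite <- app_assoc. simpl. apply ap_b; [auto | | exact (is_trail_last_idx W l0 t k0 l Hp)].
  replace (l0 ++ [(t, k); (x, l)]) with ((l0 ++ [(t, k)]) ++ [(x, l)]) by (rewrite <- app_assoc; reflexivity).
  apply Hq.
Qed.
End Atoms.

Section Retrace.
Variable W : WA.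
Local Notation step := (tri W * I3)%type.
Local Notation dummy := (dummy_step W).

Definition start (r : list step) : tri W := fst (hd dummy r).

Lemma start_app (l r : list step) : l <> [] -> start (l ++ r) = start l.
Proof. destruct l; [congruence | reflexivity]. Qed.

Lemma T_sym k s t : T W k s t -> T W k t s.
Proof. intros [H1 [H2 H3]]. split; auto. Qed.

Lemma approx_start p q : approx W p q -> start p = start q.
Proof. induction 1; auto; try congruence; [destruct l1 | destruct l | destruct l]; reflexivity. Qed.

Lemma is_trail_undetour l1 ti lam s ki l2 :
  is_trail W (l1 ++ (ti, lam) :: (s, lam) :: (ti, ki) :: l2) -> is_trail W (l1 ++ (ti, ki) :: l2).
Proof.
destruct l1 as [|y l1']; [simpl; tauto|]. intros H.
change (is_trail W ((y :: l1') ++ (ti, ki) :: l2))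
  with (inB W (fst y) /\ valid_from W y (l1' ++ (ti, ki) :: l2)).
change (is_trail W ((y :: l1') ++ (ti, lam) :: (s, lam) :: (ti, ki) :: l2)) with
  (inB W (fst y) /\ valid_from W y (l1' ++ (ti, lam) :: (s, lam) :: (ti, ki) :: l2)) in H.
rewrite valid_from_app in *. simpl in *. tauto.
Qed.

(* [retrace P] walks [P] backwards, from its last triangle to its second one,
   re-using at each triangle the index of the step that entered it. *)
Fixpoint retrace (P : list step) : list step :=
  match P with
  | x :: ((y :: _) as r) => retrace r ++ [(fst y, snd x)]
  | _ => []
  end.

Lemma is_trail_retrace P : is_trail W P -> forall Q r, is_trail W Q ->
  fst (last Q dummy) = fst (last P dummy) -> is_trail W r -> start r = start P ->
  is_trail W (removelast Q ++ retrace P ++ r).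
Proof.
induction P as [|x P IH]; intros HP Q r HQ HQP Hr Hs; [destruct HP|].
destruct P as [|y R].
- simpl retrace. rewrite app_nil_l. destruct r as [|z r']; [destruct Hr|].
  assert (HQne : Q <> []) by (intro; subst; destruct HQ).
  rewrite (app_removelast_last dummy HQne) in HQ.
  destruct (removelast Q) as [|q0 q'] eqn:Eq; [exact Hr|].
  rewrite <- Eq in *. apply is_trail_app in HQ; [|rewrite Eq; discriminate | discriminate].
  apply is_trail_app; [rewrite Eq; discriminate | discriminate|]. destruct HQ as [H1 [H2 H3]].
  split; auto. split; auto. unfold trail_step in *. simpl in *. unfold start in Hs. simpl in Hs.
  rewrite Hs, <- HQP. exact H3.
- change (retrace (x :: y :: R)) with (retrace (y :: R) ++ [(fst y, snd x)]).
  rewrite <- app_assoc. simpl app at 2.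
  assert (HyR : is_trail W (y :: R)) by (eapply is_trail_tail; [discriminate | exact HP]).
  apply IH; auto.
  destruct HP as [Hx [Hy [Hne [HT _]]]]. destruct r as [|z r']; [destruct Hr|].
  unfold start in Hs; simpl in Hs.
  split; [exact Hy|]. simpl. split; [apply Hr|]. split; [rewrite Hs; intro E0; apply Hne; auto|].
  split; [rewrite Hs; apply T_sym; exact HT | apply Hr].
Qed.

Lemma retrace_forward_approx P : is_trail W P -> forall L X, X <> [] -> start X = fst (last P dummy) ->
  is_trail W (L ++ retrace P ++ removelast P ++ X) ->
  approx W (L ++ retrace P ++ removelast P ++ X) (L ++ X).
Proof.
induction P as [|x P IH]; intros HP L X HX Hs Ht; [destruct HP|].
destruct P as [|y R]; [simpl in *; apply ap_refl; exact Ht|].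
assert (HyR : is_trail W (y :: R)) by (eapply is_trail_tail; [discriminate | exact HP]).
change (retrace (x :: y :: R)) with (retrace (y :: R) ++ [(fst y, snd x)]) in *.
change (removelast (x :: y :: R)) with (x :: removelast (y :: R)) in *.
assert (HZ : exists kz Z', removelast (y :: R) ++ X = (fst y, kz) :: Z').
{ destruct R as [|z R'].
  - simpl. destruct X as [|[xt xk] X']; [congruence|]. exists xk, X'.
    unfold start in Hs. simpl in *. subst. reflexivity.
  - simpl. destruct y as [yt yk]. exists yk, (removelast (z :: R') ++ X). reflexivity. }
destruct HZ as [kz [Z' HZ]].
assert (E1 : L ++ (retrace (y :: R) ++ [(fst y, snd x)]) ++ (x :: removelast (y :: R)) ++ X =
             (L ++ retrace (y :: R)) ++ (fst y, snd x) :: (fst x, snd x) :: (fst y, kz) :: Z').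
{ rewrite <- HZ. destruct x. rewrite <- !app_assoc. reflexivity. }
rewrite E1 in *.
eapply ap_trans; [apply ap_a; [exact Ht | eapply is_trail_undetour; exact Ht]|].
rewrite <- app_assoc, <- HZ. apply IH; auto.
rewrite app_assoc, HZ. eapply is_trail_undetour. exact Ht.
Qed.

Lemma forward_retrace_approx P : is_trail W P -> forall L X, X <> [] -> start X = start P ->
  is_trail W (L ++ removelast P ++ retrace P ++ X) ->
  approx W (L ++ removelast P ++ retrace P ++ X) (L ++ X).
Proof.
induction P as [|x P IH]; intros HP L X HX Hs Ht; [destruct HP|].
destruct P as [|y R]; [simpl in *; apply ap_refl; exact Ht|].
assert (HyR : is_trail W (y :: R)) by (eapply is_trail_tail; [discriminate | exact HP]).
change (retrace (x :: y :: R)) with (retrace (y :: R) ++ [(fst y, snd x)]) in *.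
change (removelast (x :: y :: R)) with (x :: removelast (y :: R)) in *.
destruct X as [|[xt xk] X']; [congruence|]. unfold start in Hs. simpl in Hs. subst xt.
assert (E1 : L ++ (x :: removelast (y :: R)) ++ (retrace (y :: R) ++ [(fst y, snd x)]) ++ (fst x, xk) :: X' =
             (L ++ [x]) ++ removelast (y :: R) ++ retrace (y :: R) ++ ((fst y, snd x) :: (fst x, xk) :: X')).
{ rewrite <- !app_assoc. reflexivity. }
rewrite E1 in *.
assert (H1 := IH HyR (L ++ [x]) ((fst y, snd x) :: (fst x, xk) :: X') ltac:(discriminate) eq_refl Ht).
eapply ap_trans; [exact H1|].
assert (E2 : (L ++ [x]) ++ (fst y, snd x) :: (fst x, xk) :: X' =
             L ++ (fst x, snd x) :: (fst y, snd x) :: (fst x, xk) :: X').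
{ destruct x. rewrite <- app_assoc. reflexivity. }
assert (Ht' : is_trail W (L ++ (fst x, snd x) :: (fst y, snd x) :: (fst x, xk) :: X'))
  by (rewrite <- E2; apply (approx_trail W _ _ H1)).
rewrite E2. apply ap_a; [exact Ht' | eapply is_trail_undetour; exact Ht'].
Qed.

Lemma approx_prefix (pre : list step) a :
  (forall r, is_trail W r -> start r = a -> is_trail W (pre ++ r)) ->
  forall r r', approx W r r' -> start r = a -> approx W (pre ++ r) (pre ++ r').
Proof.
intros Hg r r' H. induction H; intros Hs.
- apply ap_refl. auto.
- apply ap_sym, IHapprox. rewrite (approx_start _ _ H). auto.
- eapply ap_trans; [apply IHapprox1; auto|]. apply IHapprox2. rewrite <- (approx_start _ _ H). auto.
- rewrite !app_assoc. apply ap_a; rewrite <- !app_assoc; apply Hg; auto.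
  rewrite <- Hs. destruct l1; reflexivity.
- rewrite !app_assoc. apply ap_b; auto; rewrite <- !app_assoc; apply Hg; auto.
  rewrite <- Hs. destruct l; reflexivity.
- rewrite !app_assoc. apply ap_c; auto; rewrite <- !app_assoc; apply Hg; auto.
  rewrite <- Hs. destruct l; reflexivity.
Qed.

Lemma retrace_start_fst (x y : step) R : fst (hd dummy (retrace (x :: y :: R))) = fst (last (x :: y :: R) dummy).
Proof.
revert x y. induction R as [|z R IH]; intros x y; [reflexivity|].
change (retrace (x :: y :: z :: R)) with (retrace (y :: z :: R) ++ [(fst y, snd x)]).
assert (Hne : retrace (y :: z :: R) <> []).
{ change (retrace (y :: z :: R)) with (retrace (z :: R) ++ [(fst z, snd y)]).
  intro E0. apply app_eq_nil in E0. destruct E0; discriminate. }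
destruct (retrace (y :: z :: R)) as [|h tl] eqn:Er; [congruence|].
specialize (IH y z). rewrite Er in IH. exact IH.
Qed.

Lemma start_retrace (P r : list step) : P <> [] -> r <> [] -> start r = start P ->
  start (retrace P ++ r) = fst (last P dummy).
Proof.
intros HP Hr Hs. destruct P as [|x [|y R]]; [congruence | exact Hs|].
rewrite start_app; [apply retrace_start_fst|].
change (retrace (x :: y :: R)) with (retrace (y :: R) ++ [(fst y, snd x)]).
intro E0. apply app_eq_nil in E0. destruct E0; discriminate.
Qed.

Lemma start_detour (Q P r : list step) : Q <> [] -> P <> [] -> r <> [] ->
  fst (last Q dummy) = fst (last P dummy) -> start r = start P ->
  start (removelast Q ++ retrace P ++ r) = start Q.
Proof.
intros HQ HP Hr HQP Hs. destruct Q as [|q [|q' Q']]; [congruence| |reflexivity].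
simpl removelast. rewrite app_nil_l, start_retrace by auto. simpl in HQP. rewrite <- HQP. reflexivity.
Qed.

(* Going out along [P1], back along [P2], out along [P2] and back along [P1] is trivial. *)
Lemma detour_loop_approx (P1 P2 : list step) : is_trail W P1 -> is_trail W P2 ->
  fst (last P1 dummy) = fst (last P2 dummy) ->
  forall r, is_trail W r -> start r = start P1 ->
  approx W ((removelast P1 ++ retrace P2) ++ (removelast P2 ++ retrace P1) ++ r) r.
Proof.
intros H1 H2 Ht r Hr Hs.
assert (P1ne : P1 <> []) by (intro; subst; destruct H1).
assert (P2ne : P2 <> []) by (intro; subst; destruct H2).
assert (rne : r <> []) by (intro; subst; destruct Hr).
assert (T2 : is_trail W ((removelast P1 ++ retrace P2) ++ (removelast P2 ++ retrace P1) ++ r)).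
{ rewrite <- !app_assoc. apply is_trail_retrace; auto.
  - apply is_trail_retrace; auto.
  - apply start_detour; auto. }
rewrite <- !app_assoc in *.
assert (Hx : retrace P1 ++ r <> []) by (intro E0; apply app_eq_nil in E0; destruct E0; congruence).
assert (Hsx : start (retrace P1 ++ r) = fst (last P2 dummy)) by (rewrite start_retrace; auto).
assert (B := retrace_forward_approx P2 H2 (removelast P1) (retrace P1 ++ r) Hx Hsx T2).
eapply ap_trans; [exact B|].
rewrite <- (app_nil_l (removelast P1 ++ retrace P1 ++ r)). apply forward_retrace_approx; auto.
rewrite app_nil_l. apply (approx_trail W _ _ B).
Qed.
End Retrace.

Section Reroute.
Variable W : WA.
Local Notation step := (tri W * I3)%type.
Local Notation emi := excluded_middle_informative.
Local Notation start := (start W).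

Definition Rt_automorphism (pi pi' : UB W -> UB W) : Prop :=
  (forall c, pi' (pi c) = c) /\ (forall c, pi (pi' c) = c) /\
  (forall t u, Rt W t u -> Rt W t (fun x => pi (u x))) /\
  (forall t u, Rt W t u -> Rt W t (fun x => pi' (u x))).

Lemma Rt_automorphism_sym pi pi' : Rt_automorphism pi pi' -> Rt_automorphism pi' pi.
Proof. unfold Rt_automorphism. tauto. Qed.

Section Prefixing.
Variables (a b : tri W) (pre1 pre2 : list step).
Hypothesis pre1_trail : forall r, is_trail W r -> start r = a -> is_trail W (pre1 ++ r).
Hypothesis pre2_trail : forall r, is_trail W r -> start r = b -> is_trail W (pre2 ++ r).

Definition reroute_prefix (r : list step) : list step :=
  if emi (start r = a) then pre1 else if emi (start r = b) then pre2 else [].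
Definition reroute (r : list step) : list step := reroute_prefix r ++ r.

Lemma is_trail_reroute r : is_trail W r -> is_trail W (reroute r).
Proof. intros H. unfold reroute, reroute_prefix. destruct (emi _); auto. destruct (emi _); auto. Qed.

Lemma reroute_approx r r' : approx W r r' -> approx W (reroute r) (reroute r').
Proof.
intros H. assert (Hs := approx_start W _ _ H). unfold reroute, reroute_prefix. rewrite <- Hs.
destruct (emi _); [apply (approx_prefix W pre1 a); auto|].
destruct (emi _); [apply (approx_prefix W pre2 b); auto | exact H].
Qed.

Lemma reroute_prefix_last_idx (l : list step) t k k' :
  reroute_prefix (l ++ [(t, k)]) = reroute_prefix (l ++ [(t, k')]).
Proof. unfold reroute_prefix. replace (start (l ++ [(t, k')])) with (start (l ++ [(t, k)])); [|destruct l]; reflexivity. Qed.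

Definition reroute_class (C : list step -> Prop) : list step -> Prop :=
  fun r' => exists r, C r /\ approx W (reroute r) r'.

Lemma reroute_class_cls r0 : is_trail W r0 -> reroute_class (cls W r0) = cls W (reroute r0).
Proof.
intros H0. apply functional_extensionality. intros r'. apply propositional_extensionality.
unfold reroute_class, cls. split.
- intros [r [H1 H2]]. eapply ap_trans; [apply reroute_approx; exact H1 | exact H2].
- intros H. exists r0. split; auto. apply ap_refl; auto.
Qed.

Definition reroute_point (c : UB W) : UB W.
Proof.
refine (exist _ (reroute_class (proj1_sig c)) _). destruct c as [C [r0 [Hr0 E0]]]. simpl.
exists (reroute r0). split; [apply is_trail_reroute; auto | subst; apply reroute_class_cls; auto].
Defined.

Lemma reroute_point_val c : proj1_sig (reroute_point c) = reroute_class (proj1_sig c).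
Proof. reflexivity. Qed.

Lemma Rt_reroute t u : Rt W t u -> Rt W t (fun x => reroute_point (u x)).
Proof.
intros H. destruct (Rt_inv W t u H) as [l [k [Hp Hv]]].
exists ((reroute_prefix (l ++ [(t, k)]) ++ l) ++ [(t, k)]).
split; [rewrite <- app_assoc; apply is_trail_reroute; exact Hp|].
split; [eexists _, _; reflexivity|].
intros x. rewrite reroute_point_val, Hv, setlast_snoc, reroute_class_cls
  by exact (is_trail_last_idx W l t k x Hp).
unfold reroute. rewrite (reroute_prefix_last_idx l t x k), app_assoc. reflexivity.
Qed.
End Prefixing.

Section Inverse.
Variables (a b : tri W) (pre1 pre2 : list step).
Hypothesis pre1_trail : forall r, is_trail W r -> start r = a -> is_trail W (pre1 ++ r).
Hypothesis pre2_trail : forall r, is_trail W r -> start r = b -> is_trail W (pre2 ++ r).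
Hypothesis pre1_start : forall r, is_trail W r -> start r = a -> start (pre1 ++ r) = b.
Hypothesis pre2_start : forall r, is_trail W r -> start r = b -> start (pre2 ++ r) = a.
Hypothesis pre21_approx : forall r, is_trail W r -> start r = a -> approx W (pre2 ++ pre1 ++ r) r.
Hypothesis pre12_approx : forall r, is_trail W r -> start r = b -> approx W (pre1 ++ pre2 ++ r) r.

Lemma reroute_inv_approx r : is_trail W r ->
  approx W (reroute b a pre2 pre1 (reroute a b pre1 pre2 r)) r.
Proof.
intros H. unfold reroute at 2, reroute_prefix.
destruct (emi (start r = a)) as [Ea|Na].
- unfold reroute, reroute_prefix. rewrite (pre1_start r H Ea).
  destruct (emi (b = b)) as [_|C]; [auto | congruence].
- destruct (emi (start r = b)) as [Eb|Nb].
  + unfold reroute, reroute_prefix. rewrite (pre2_start r H Eb).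
    destruct (emi (a = b)) as [Eab|_]; [exfalso; apply Na; congruence|].
    destruct (emi (a = a)) as [_|C]; [auto | congruence].
  + unfold reroute, reroute_prefix. simpl app.
    destruct (emi (start r = b)); [contradiction|].
    destruct (emi (start r = a)); [contradiction | apply ap_refl; auto].
Qed.

Lemma reroute_point_cancel c :
  reroute_point b a pre2 pre1 pre2_trail pre1_trail (reroute_point a b pre1 pre2 pre1_trail pre2_trail c) = c.
Proof.
destruct c as [C [r0 [Hr0 E0]]]. apply UB_eq. rewrite !reroute_point_val. simpl. subst C.
rewrite (reroute_class_cls a b pre1 pre2 pre1_trail pre2_trail r0 Hr0).
rewrite (reroute_class_cls b a pre2 pre1 pre2_trail pre1_trail _
          (is_trail_reroute a b pre1 pre2 pre1_trail pre2_trail r0 Hr0)).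
apply cls_eq, reroute_inv_approx; auto.
Qed.
End Inverse.
End Reroute.

Section Swap.
Variable W : WA.
Local Notation step := (tri W * I3)%type.
Local Notation dummy := (dummy_step W).
Local Notation start := (start W).
Local Notation retrace := (retrace W).

Variable t : tri W.
Variables (l1 l2 : list step) (k1 k2 : I3).
Let P1 := l1 ++ [(t, k1)].
Let P2 := l2 ++ [(t, k2)].
Hypothesis P1_trail : is_trail W P1.
Hypothesis P2_trail : is_trail W P2.

Let same_end : fst (last P1 dummy) = fst (last P2 dummy).
Proof. unfold P1, P2. rewrite !last_last. reflexivity. Qed.

Let P1_ne : P1 <> []. Proof. intro E0. rewrite E0 in P1_trail. destruct P1_trail. Qed.
Let P2_ne : P2 <> []. Proof. intro E0. rewrite E0 in P2_trail. destruct P2_trail. Qed.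

(* [detour1] leads from the start of [P2] along [P2] and back along [P1] to the start of [P1]. *)
Definition detour1 : list step := removelast P2 ++ retrace P1.
Definition detour2 : list step := removelast P1 ++ retrace P2.

Lemma detour1_trail r : is_trail W r -> start r = start P1 -> is_trail W (detour1 ++ r).
Proof. intros Hr Hs. unfold detour1. rewrite <- app_assoc. apply is_trail_retrace; auto. Qed.
Lemma detour2_trail r : is_trail W r -> start r = start P2 -> is_trail W (detour2 ++ r).
Proof. intros Hr Hs. unfold detour2. rewrite <- app_assoc. apply is_trail_retrace; auto. Qed.

Lemma detour1_start r : is_trail W r -> start r = start P1 -> start (detour1 ++ r) = start P2.
Proof.
intros Hr Hs. unfold detour1. rewrite <- app_assoc.
apply start_detour; auto. intro E0; subst; destruct Hr.
Qed.
Lemma detour2_start r : is_trail W r -> start r = start P2 -> start (detour2 ++ r) = start P1.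
Proof.
intros Hr Hs. unfold detour2. rewrite <- app_assoc.
apply start_detour; auto. intro E0; subst; destruct Hr.
Qed.

Definition swap : UB W -> UB W := reroute_point W (start P1) (start P2) detour1 detour2 detour1_trail detour2_trail.
Definition unswap : UB W -> UB W := reroute_point W (start P2) (start P1) detour2 detour1 detour2_trail detour1_trail.

Lemma swap_automorphism : Rt_automorphism W swap unswap.
Proof.
assert (loop1 : forall r, is_trail W r -> start r = start P1 -> approx W (detour2 ++ detour1 ++ r) r)
  by (intros; apply detour_loop_approx; auto).
assert (loop2 : forall r, is_trail W r -> start r = start P2 -> approx W (detour1 ++ detour2 ++ r) r)
  by (intros; apply detour_loop_approx; auto).
split; [|split; [|split]]; intros.
- apply reroute_point_cancel; auto using detour1_start, detour2_start.
- apply reroute_point_cancel; auto using detour1_start, detour2_start.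
- apply Rt_reroute; auto.
- apply Rt_reroute; auto.
Qed.

Lemma swap_vertices v w : (forall a, proj1_sig (v a) = cls W (l1 ++ [(t, a)])) ->
  (forall a, proj1_sig (w a) = cls W (l2 ++ [(t, a)])) -> (fun x => swap (v x)) = w.
Proof.
intros Hv Hw. apply functional_extensionality. intros x. apply UB_eq.
unfold swap. rewrite reroute_point_val, Hv, Hw.
assert (Htx : is_trail W (l1 ++ [(t, x)])) by exact (is_trail_last_idx W l1 t k1 x P1_trail).
rewrite (reroute_class_cls W _ _ _ _ detour1_trail detour2_trail _ Htx). apply cls_eq.
unfold reroute, reroute_prefix.
destruct (excluded_middle_informative _) as [_|C]; [|exfalso; apply C; destruct l1; reflexivity].
assert (RL1 : removelast P1 = l1) by apply removelast_last.
assert (RL2 : removelast P2 = l2) by apply removelast_last.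
unfold detour1. rewrite RL2, <- app_assoc, <- RL1.
apply retrace_forward_approx; auto.
- discriminate.
- unfold P1. rewrite last_last. reflexivity.
- rewrite RL1, <- RL2, app_assoc. apply detour1_trail; auto. destruct l1; reflexivity.
Qed.
End Swap.

Section Homogeneity.
Variable W : WA.

Definition Rt_invariant (Z : vec W -> Prop) : Prop :=
  forall pi pi', Rt_automorphism W pi pi' -> forall u, Z u -> Z (fun x => pi (u x)).

Lemma Rt_invariant_cyl_closed : cyl_closed W Rt_invariant.
Proof.
split; [|split; [|split]].
- intros G HG pi pi' Hpi u [Y [HGY HY]]. exists Y. split; auto. apply (HG Y HGY pi pi'); auto.
- intros X HX pi pi' Hpi u Hu Hc. apply Hu.
  assert (E0 : (fun x => pi' (pi (u x))) = u).
  { apply functional_extensionality. intros. apply Hpi. }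
  rewrite <- E0. apply (HX pi' pi); auto. apply Rt_automorphism_sym; auto.
- intros k X HX pi pi' Hpi u [u0 [Hu0 Hagree]].
  exists (fun x => pi (u0 x)). split; [apply (HX pi pi'); auto|].
  intros l Hl. simpl. rewrite Hagree; auto.
- intros k l pi pi' Hpi u Hu. unfold Diag in *. rewrite Hu. reflexivity.
Qed.

Lemma inC_Rt_invariant X : inC W X -> Rt_invariant X.
Proof.
intros HX. apply HX; [apply Rt_invariant_cyl_closed|].
intros t _ pi pi' Hpi u Hu. apply Hpi; auto.
Qed.

(* Any two vertex sequences in the same [R_t] are related by an automorphism,
   so the members of [C] are unions of [R_t]'s. *)
Lemma inC_Rt_homogeneous t v w Y : inC W Y -> Rt W t v -> Rt W t w -> Y v -> Y w.
Proof.
intros HY Hv Hw HYv.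
destruct (Rt_inv W t v Hv) as [l1 [k1 [Hp1 Hv1]]].
destruct (Rt_inv W t w Hw) as [l2 [k2 [Hp2 Hw2]]].
rewrite <- (swap_vertices W t l1 l2 k1 k2 Hp1 Hp2 v w Hv1 Hw2).
apply (inC_Rt_invariant Y HY _ _ (swap_automorphism W t l1 l2 k1 k2 Hp1 Hp2)); auto.
Qed.
End Homogeneity.

Lemma pred_ext {T : Type} (P Q : T -> Prop) : (forall x, P x <-> Q x) -> P = Q.
Proof. intros H. apply functional_extensionality. intros x. apply propositional_extensionality, H. Qed.

Section Isomorphism.
Variable W : WA.
Hypothesis W_atomic : atomic W.

Lemma Rmap_inRc X : subB W X -> inRc W (Rmap W X).
Proof.
intros HX. split.
- intros F [Hunion _] HR.
  replace (Rmap W X) with (fun v => exists Y, (fun Y => exists t, X t /\ Y = Rt W t) Y /\ Y v).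
  + apply Hunion. intros Y [t [Xt ->]]. apply HR, HX; auto.
  + apply functional_extensionality. intros v. apply propositional_extensionality. split.
    * intros [Y [[t [Xt ->]] Yv]]. exists t; auto.
    * intros [t [Xt Rv]]. exists (Rt W t). split; eauto.
- intros v [t [Xt Rv]]. exists t. split; auto.
Qed.

Lemma Rmap_injective X Y : subB W X -> subB W Y -> Rmap W X = Rmap W Y -> X = Y.
Proof.
assert (incl : forall X Y, subB W X -> Rmap W X = Rmap W Y -> forall t, X t -> Y t).
{ intros X0 Y0 HX E0 t H. destruct (Rt_nonempty W t (HX t H)) as [v Hv].
  assert (H0 : Rmap W X0 v) by (exists t; auto). rewrite E0 in H0.
  destruct H0 as [t' [Yt' Hv']]. rewrite (Rt_disjoint W t t' v W_atomic Hv Hv'). auto. }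
intros HX HY E0. apply functional_extensionality. intros t. apply propositional_extensionality.
split; apply incl; auto.
Qed.

Lemma Rmap_surjective Y : inRc W Y -> exists X, subB W X /\ Rmap W X = Y.
Proof.
intros [HC HV]. exists (fun t => inB W t /\ forall v, Rt W t v -> Y v). split.
- intros t [Ht _]. auto.
- apply functional_extensionality. intros v. apply propositional_extensionality. split.
  + intros [t [[_ H] Rv]]; auto.
  + intros Yv. destruct (HV v Yv) as [t [Ht Rv]]. exists t. split; auto. split; auto.
    intros w Rw. exact (inC_Rt_homogeneous W t v w Y HC Rv Rw Yv).
Qed.

Lemma Rmap_union X Y : Rmap W (Cm_union W X Y) = Rc_union W (Rmap W X) (Rmap W Y).
Proof.
apply pred_ext. intros v. unfold Rmap, Cm_union, Rc_union. split.
- intros [t [[Xt|Yt] Rv]]; [left | right]; exists t; auto.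
- intros [[t [Xt Rv]]|[t [Yt Rv]]]; exists t; auto.
Qed.

Lemma Rmap_inter X Y : Rmap W (Cm_inter W X Y) = Rc_inter W (Rmap W X) (Rmap W Y).
Proof.
apply pred_ext. intros v. unfold Rmap, Cm_inter, Rc_inter. split.
- intros [t [[Xt Yt] Rv]]. split; exists t; auto.
- intros [[t [Xt Rv]] [t' [Yt' Rv']]]. rewrite <- (Rt_disjoint W t t' v W_atomic Rv Rv') in Yt'.
  exists t. auto.
Qed.

Lemma Rmap_compl X : Rmap W (Cm_compl W X) = Rc_compl W (Rmap W X).
Proof.
apply pred_ext. intros v. unfold Rmap, Cm_compl, Rc_compl, VB. split.
- intros [t [[Ht NX] Rv]]. split; [exists t; auto|].
  intros [t' [Xt' Rv']]. rewrite <- (Rt_disjoint W t t' v W_atomic Rv Rv') in Xt'. auto.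
- intros [[t [Ht Rv]] N]. exists t. split; [split; auto|auto]. intro Xt. apply N. exists t; auto.
Qed.

Lemma Rmap_empty : Rmap W (Cm_empty W) = Rc_empty W.
Proof. apply pred_ext. intros v. unfold Rmap, Cm_empty, Rc_empty. split; [intros [t [[] _]] | intros []]. Qed.

Lemma Rmap_Tstar k X : subB W X -> Rmap W (Tstar W k X) = Rc_cyl W k (Rmap W X).
Proof.
intros HX. apply pred_ext. intros v. unfold Rmap, Tstar, Rc_cyl, Cyl. split.
- intros [y [[Hy [x [Xx HT]]] Rv]]. split; [exists y; auto|].
  destruct (Rt_step W y v k x Rv HT (HX x Xx)) as [u [Ru Hu]].
  exists u. split; [exists x; auto | exact Hu].
- intros [[y [Hy Rv]] [u [[x [Xx Ru]] Hu]]]. exists y. split; auto. split; auto.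
  exists x. split; auto. split; [auto|]. split; [apply HX; auto|].
  apply tri_eq_at_of_edges. intros a d Ha Hd Had.
  apply (Rt_edge W y v x u a d W_atomic Rv Ru Had); symmetry; auto.
Qed.

Lemma Rmap_E k l : Rmap W (E W k l) = Rc_diag W k l.
Proof.
apply pred_ext. intros v. unfold Rmap, Rc_diag, Diag. split.
- intros [t [HE Rv]]. split; [exists t; split; [apply HE | auto]|].
  apply (Rt_E_diag W t v k l Rv HE).
- intros [[t [Ht Rv]] Hd]. exists t. split; auto. apply (Rt_diag_E W t v k l Rv Hd).
Qed.
End Isomorphism.

Theorem theorem4 (W : WA) (Hat : atomic W) : Rmap_iso W.
Proof.
split; [exact (Rmap_inRc W)|].
split; [exact (Rmap_injective W Hat)|].
split; [exact (Rmap_surjective W)|].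
split; [intros; apply Rmap_union|].
split; [intros; apply Rmap_inter; auto|].
split; [intros; apply Rmap_compl; auto|].
split; [exact (Rmap_empty W)|].
split; [reflexivity|].
split; [exact (Rmap_Tstar W Hat) | exact (Rmap_E W)].
Qed.
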